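(* There is an absolute constant $c_0>0$ such that if $\kappa\le c_0$, $B\sqrt\Gamma\le c_0\kappa$, and $s\Delta>4\pi$ with $\Delta=12B\Gamma/\kappa$, then $$\mathcal B_{\rm SW}\subseteq\bigcup_{i=1}^s\Bigl(\mathcal B_0^{(i)}\cup\bigcup_{\alpha=1}^3\bigcup_{j=1}^B\mathcal B^{(i)}_{\alpha,j}\Bigr).$$
   Context: Angles $\theta_{\boldsymbol r}$ with $\boldsymbol S_{\boldsymbol r}=(\cos\theta_{\boldsymbol r},\sin\theta_{\boldsymbol r})$, $S^{(\alpha)}_{\boldsymbol r}=\cos(\theta_{\boldsymbol r}-\phi_\alpha)$ with $\phi_1=0,\phi_2=\tfrac{2\pi}3,\phi_3=-\tfrac{2\pi}3$ (directions of $\hat{\mathrm a},\hat{\mathrm b},\hat{\mathrm c}$). $\Lambda_B=\{0,\dots,B\}^3$. The block is good if (a) $|S^{(\alpha)}_{\boldsymbol r}-S^{(\alpha)}_{\boldsymbol r+\hat{\mathrm e}_\alpha}|<\Gamma$ for all nearest-neighbour pairs in $\Lambda_B$ and (b) for some $\tau\in\{1,\dots,6\}$, $|\theta_{\boldsymbol r}-\tfrac\pi3\tau|<2\kappa$ (mod $2\pi$) for all $\boldsymbol r\in\Lambda_B$; $\mathcal B$ is the complement (bad). $\mathcal B_{\rm E}$ is the event that $|S^{(\alpha)}_{\boldsymbol r}-S^{(\alpha)}_{\boldsymbol r+\hat{\mathrm e}_\alpha}|\ge\Gamma$ for some pair in $\Lambda_B$, and $\mathcal B_{\rm SW}=\mathcal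 B\setminus\mathcal B_{\rm E}$. Let $\theta^\star_1,\dots,\theta^\star_s$ be $s$ uniformly spaced points on the circle. $\mathcal B^{(i)}_0$ is the event that the block is bad and $|\theta_{\boldsymbol r}-\theta_i^\star|<\Delta$ for all $\boldsymbol r\in\Lambda_B$. For $\alpha\in\{1,2,3\}$ and $j\in\{1,\dots,B\}$, let $\mathbb H_j$ be the set of sites whose $\alpha$-th coordinate equals $j$, and $\tilde\theta_i^\star=2\phi_\alpha-\theta_i^\star$. If the angle between $\theta^\star_i$ and $\phi_\alpha$ lies in $(-\kappa,\kappa)$ or $(\pi-\kappa,\pi+\kappa)$ (mod $2\pi$), $\mathcal B^{(i)}_{\alpha,j}=\emptyset$; otherwise $\mathcal B^{(i)}_{\alpha,j}$ is the set of configurations in $\mathcal B_{\rm SW}$ with $|\theta_{\boldsymbol r}-\theta^\star_i|<\Delta$ for all $\boldsymbol r\in\Lambda_B\cap\mathbb H_{j-1}$ and $|\theta_{\boldsymbol r}-\tilde\theta^\star_i|<\Delta$ for all $\boldsymbol r\in\Lambda_B\cap\mathbb H_j$. *)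

From Stdlib Require Import Reals ZArith Lia.
Open Scope R_scope.

(* Sites of Z^3 restricted to nonnegative coordinates (Lambda_B lives there). *)
Definition site : Type := (nat * nat * nat)%type.

Definition coord (a : nat) (r : site) : nat :=
  match r with (x, y, z) =>
    match a with 1%nat => x | 2%nat => y | _ => z end end.

Definition shift (a : nat) (r : site) : site :=
  match r with (x, y, z) =>
    match a with 1%nat => (S x, y, z) | 2%nat => (x, S y, z) | _ => (x, y, S z) end end.

Definition in_box (B : nat) (r : site) : Prop :=
  (coord 1 r <= B)%nat /\ (coord 2 r <= B)%nat /\ (coord 3 r <= B)%nat.

Definition phi (a : nat) : R :=
  match a with 1%nat => 0 | 2%nat => 2 * PI / 3 | _ => - (2 * PI / 3) end.

Definition Scomp (a : nat) (t : R) : R := cos (t - phi a).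

Definition near_mod (x y d : R) : Prop :=
  exists k : Z, Rabs (x - y - 2 * PI * IZR k) < d.

Definition config : Type := site -> R.

Definition cond_a (Gam : R) (B : nat) (th : config) : Prop :=
  forall (a : nat) (r : site), (1 <= a <= 3)%nat -> in_box B r -> in_box B (shift a r) ->
    Rabs (Scomp a (th r) - Scomp a (th (shift a r))) < Gam.

Definition cond_b (kap : R) (B : nat) (th : config) : Prop :=
  exists tau : nat, (1 <= tau <= 6)%nat /\
    forall r, in_box B r -> near_mod (th r) (PI / 3 * INR tau) (2 * kap).

Definition good (kap Gam : R) (B : nat) (th : config) : Prop :=
  cond_a Gam B th /\ cond_b kap B th.

Definition bad (kap Gam : R) (B : nat) (th : config) : Prop := ~ good kap Gam B th.

Definition badE (Gam : R) (B : nat) (th : config) : Prop :=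
  exists (a : nat) (r : site), (1 <= a <= 3)%nat /\ in_box B r /\ in_box B (shift a r) /\
    Gam <= Rabs (Scomp a (th r) - Scomp a (th (shift a r))).

Definition badSW (kap Gam : R) (B : nat) (th : config) : Prop :=
  bad kap Gam B th /\ ~ badE Gam B th.

(* s uniformly spaced points on the circle, with arbitrary offset th0, i = 1..s *)
Definition theta_star (th0 : R) (s i : nat) : R := th0 + 2 * PI * INR i / INR s.

Definition bad0 (kap Gam Del : R) (B : nat) (ts : R) (th : config) : Prop :=
  bad kap Gam B th /\ forall r, in_box B r -> near_mod (th r) ts Del.

Definition aligned (kap : R) (a : nat) (ts : R) : Prop :=
  near_mod ts (phi a) kap \/ near_mod ts (phi a + PI) kap.

Definition bad_aj (kap Gam Del : R) (B : nat) (ts : R) (a j : nat) (th : config) : Prop :=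
  ~ aligned kap a ts /\
  badSW kap Gam B th /\
  (forall r, in_box B r -> coord a r = (j - 1)%nat -> near_mod (th r) ts Del) /\
  (forall r, in_box B r -> coord a r = j -> near_mod (th r) (2 * phi a - ts) Del).

(* Write [g = sqrt Gam].  Off [B_E], every edge [(r, r + e_a)] has
   [|cos (θ_r - φ_a) - cos (θ_(r+e_a) - φ_a)| < g^2], so [θ_(r+e_a)] lies within [5 g] of
   [θ_r] or of its reflection [2 φ_a - θ_r] (a flip), and within [O(g^2)] where
   [|sin (θ_r - φ_a)|] is bounded below.  Going around a plaquette, both paths compose to the
   same map [x ↦ ±x + n 2π/3]; hence a flip persists along the other two directions and two
   directions never flip at the same site, so all flips are in one direction [a] and fill
   whole layers.
   If [θ] at the origin is [κ]-far from [π/3 Z], all angles stay far, every edge is sensitive,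
   and either nothing flips (all angles near one [θ*]: [B_0]) or the two layers around a flip
   are near [θ*] and its reflection ([B_(a,j)]); were [θ*] aligned with [φ_a], the block
   would be good.  If [θ] at the origin is near [π/3 Z], all angles stay near [π/3 Z]; without
   flips the block would be good, and across a flip one of the two adjacent layers is
   sensitive for each in-layer direction, which again gives the layer estimates.  Finally one
   of the [s] equally spaced [θ*_i] lies within [Δ/4] of the centre so obtained. *)

From Stdlib Require Import Reals ZArith Lia Lra Classical.
Open Scope R_scope.

Lemma PI_gt_3 : 3 < PI.
Proof. generalize PI2_3_2; lra. Qed.

Lemma Rabs_lt_iff x d : Rabs x < d <-> -d < x < d.
Proof. split; [intro H; apply Rabs_def2 in H; lra | intros [H1 H2]; apply Rabs_def1; lra]. Qed.

Lemma Rabs_IZR_ge_1 (L : Z) : L <> 0%Z -> 1 <= Rabs (IZR L).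
Proof.
  intro N. destruct (Z_lt_le_dec L 0).
  - rewrite Rabs_left by (apply IZR_lt; lia).
    assert (IZR L <= -1) by (apply IZR_le; lia). lra.
  - rewrite Rabs_pos_eq by (apply IZR_le; lia). apply IZR_le; lia.
Qed.

Lemma IZR_mul_small_eq_0 (L : Z) c : 0 < c -> Rabs (IZR L * c) < c -> L = 0%Z.
Proof.
  intros Hc H. destruct (Z.eq_dec L 0) as [|N]; auto.
  rewrite Rabs_mult, (Rabs_pos_eq c) in H by lra.
  pose proof (Rabs_IZR_ge_1 L N). nra.
Qed.

Ltac push_IZR := repeat first [rewrite plus_IZR | rewrite minus_IZR | rewrite mult_IZR | rewrite opp_IZR].

(** * Distances modulo 2π *)

Lemma near_mod_congr x y x' y' d : near_mod x y d ->
  (exists m : Z, x' - y' = x - y + 2*PI*IZR m \/ x' - y' = -(x - y) + 2*PI*IZR m) ->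
  near_mod x' y' d.
Proof.
  intros [k Hk] [m [E|E]].
  - exists (k+m)%Z. rewrite plus_IZR.
    replace (x' - y' - 2*PI*(IZR k + IZR m)) with (x - y - 2*PI*IZR k) by lra. auto.
  - exists (m - k)%Z. rewrite minus_IZR.
    replace (x' - y' - 2*PI*(IZR m - IZR k)) with (-(x - y - 2*PI*IZR k)) by lra.
    rewrite Rabs_Ropp; auto.
Qed.

Lemma near_mod_sym x y d : near_mod x y d -> near_mod y x d.
Proof. intro H; apply (near_mod_congr _ _ _ _ _ H). exists 0%Z; right; simpl; lra. Qed.

Lemma near_mod_trans x y z d1 d2 : near_mod x y d1 -> near_mod y z d2 -> near_mod x z (d1 + d2).
Proof.
  intros [k1 H1] [k2 H2]. exists (k1 + k2)%Z. rewrite plus_IZR.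
  replace (x - z - 2*PI*(IZR k1 + IZR k2))
    with ((x - y - 2*PI*IZR k1) + (y - z - 2*PI*IZR k2)) by lra.
  eapply Rle_lt_trans; [apply Rabs_triang | lra].
Qed.

Lemma near_mod_weaken x y d1 d2 : near_mod x y d1 -> d1 <= d2 -> near_mod x y d2.
Proof. intros [k H] Hd; exists k; lra. Qed.

Lemma near_mod_refl x d : 0 < d -> near_mod x x d.
Proof. intro; exists 0%Z. replace (x - x - 2*PI*IZR 0) with 0 by (simpl; lra). rewrite Rabs_R0; auto. Qed.

Lemma near_mod_reflect c x y d : near_mod x y d -> near_mod (c - x) (c - y) d.
Proof. intro H; apply (near_mod_congr _ _ _ _ _ H). exists 0%Z; right; simpl; lra. Qed.

Lemma near_mod_sub_r x y c d : near_mod x y d -> near_mod (x - c) (y - c) d.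
Proof. intro H; apply (near_mod_congr _ _ _ _ _ H). exists 0%Z; left; simpl; ring. Qed.

Lemma near_mod_add_2PI x y d (m : Z) : near_mod x y d -> near_mod x (y + 2*PI*IZR m) d.
Proof. intro H; apply (near_mod_congr _ _ _ _ _ H). exists (-m)%Z; left; rewrite opp_IZR; lra. Qed.

(** * Trigonometric estimates *)

Lemma sin_IZR_PI (n : Z) : sin (IZR n * PI) = 0.
Proof. apply sin_eq_0_1; eauto. Qed.

Lemma Rabs_cos_IZR_PI (n : Z) : Rabs (cos (IZR n * PI)) = 1.
Proof.
  pose proof (sin2_cos2 (IZR n * PI)) as H. rewrite sin_IZR_PI in H. unfold Rsqr in H.
  assert (Hc : Rabs (cos (IZR n * PI)) * Rabs (cos (IZR n * PI)) = 1).
  { rewrite <- Rabs_mult, Rabs_pos_eq; nra. }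
  pose proof (Rabs_pos (cos (IZR n * PI))). nra.
Qed.

Lemma Rabs_sin_sub_IZR_PI t (n : Z) : Rabs (sin (t - IZR n * PI)) = Rabs (sin t).
Proof.
  rewrite sin_minus, sin_IZR_PI, Rmult_0_r, Rminus_0_r, Rabs_mult, Rabs_cos_IZR_PI. ring.
Qed.

Lemma cos_add_2PI_IZR x (k : Z) : cos (x + 2*PI*IZR k) = cos x.
Proof.
  rewrite cos_plus.
  replace (2*PI*IZR k) with (IZR (2*k) * PI) by (rewrite mult_IZR; simpl; ring).
  rewrite sin_IZR_PI.
  replace (IZR (2*k) * PI) with (2 * (IZR k * PI)) by (rewrite mult_IZR; simpl; ring).
  rewrite cos_2a_sin, sin_IZR_PI. ring.
Qed.

Lemma exists_IZR_PI_within_PI2 t : exists n : Z, Rabs (t - IZR n * PI) <= PI/2.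
Proof.
  pose proof PI_gt_3 as HP.
  destruct (archimed (t/PI + /2)) as [H1 H2].
  exists (up (t/PI + /2) - 1)%Z. rewrite minus_IZR. simpl.
  set (z := IZR (up (t / PI + / 2))) in *.
  assert (E : t = (t/PI) * PI) by (field; lra).
  set (u := t/PI) in *.
  assert (A1 : (u - /2) * PI < (z - 1) * PI) by (apply Rmult_lt_compat_r; lra).
  assert (A2 : (z - 1) * PI <= (u + /2) * PI) by (apply Rmult_le_compat_r; lra).
  apply Rabs_le. rewrite E. lra.
Qed.

Lemma sin_approx_1 a : sin_approx a 1 = a - a^3/6.
Proof. unfold sin_approx, sin_term. simpl. field. Qed.

Lemma sin_approx_2 a : sin_approx a 2 = a - a^3/6 + a^5/120.
Proof. unfold sin_approx, sin_term. simpl. field. Qed.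

Lemma Rabs_sin_ge_cubic s : Rabs s <= 4 -> Rabs s - Rabs s ^ 3 / 6 <= Rabs (sin s).
Proof.
  intro Hs. destruct (Rle_dec 0 s) as [H|H].
  - rewrite (Rabs_pos_eq s) in * by lra.
    destruct (pre_sin_bound s 0 H Hs) as [L _]. simpl in L. rewrite sin_approx_1 in L.
    eapply Rle_trans; [exact L | apply Rle_abs].
  - rewrite (Rabs_left s) in * by lra.
    assert (H0 : 0 <= -s) by lra.
    destruct (pre_sin_bound (-s) 0 H0 Hs) as [L _]. simpl in L. rewrite sin_approx_1, sin_antisym in L.
    rewrite <- Rabs_Ropp. eapply Rle_trans; [exact L | apply Rle_abs].
Qed.

Lemma Rabs_sin_le_nonneg z : 0 <= z -> z < 1 -> Rabs (sin z) <= z.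
Proof.
  intros H H1. assert (Hz : z <= 4) by lra.
  destruct (pre_sin_bound z 0 H Hz) as [L U]. simpl in L, U.
  rewrite sin_approx_1 in L. rewrite sin_approx_2 in U.
  assert (z^2 <= 1) by nra. assert (0 <= z^3) by (simpl; nra).
  assert (z^5 = z^3 * z^2) by ring. assert (z^3 = z * z^2) by ring.
  apply Rabs_le. split; nra.
Qed.

Lemma Rabs_sin_le z : Rabs (sin z) <= Rabs z.
Proof.
  pose proof (SIN_bound z) as Hb.
  destruct (Rle_dec 1 (Rabs z)). { apply Rabs_le; lra. }
  destruct (Rle_dec 0 z) as [H|H].
  - rewrite (Rabs_pos_eq z) in * by lra. apply Rabs_sin_le_nonneg; lra.
  - rewrite (Rabs_left z) in * by lra. rewrite <- Rabs_Ropp, <- sin_antisym.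
    apply Rabs_sin_le_nonneg; lra.
Qed.

Lemma Rabs_sin_add_ge x y : Rabs (sin x) - Rabs y <= Rabs (sin (x + y)).
Proof.
  pose proof (form4 (x+y) x) as F.
  replace ((x + y - x)/2) with (y/2) in F by field.
  assert (Hd : Rabs (sin (x+y) - sin x) <= Rabs y).
  { rewrite F, !Rabs_mult. pose proof (Rabs_sin_le (y/2)).
    pose proof (COS_bound ((x + y + x) / 2)).
    assert (Rabs (cos ((x + y + x) / 2)) <= 1) by (apply Rabs_le; lra).
    replace (Rabs (y/2)) with (Rabs y / 2) in *
      by (unfold Rdiv; rewrite Rabs_mult, (Rabs_pos_eq (/2)) by lra; ring).
    rewrite (Rabs_pos_eq 2) by lra.
    pose proof (Rabs_pos (sin (y/2))). pose proof (Rabs_pos (cos ((x + y + x) / 2))). nra. }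
  pose proof (Rabs_triang_inv (sin x) (sin (x+y))).
  rewrite <- Rabs_Ropp in Hd. replace (-(sin (x+y) - sin x)) with (sin x - sin (x+y)) in Hd by ring. lra.
Qed.

Lemma Rabs_sin_ge_third s : Rabs s <= 2 -> Rabs s / 3 <= Rabs (sin s).
Proof.
  intro H. pose proof (Rabs_sin_ge_cubic s ltac:(lra)).
  pose proof (Rabs_pos s). assert (Rabs s ^ 3 <= 4 * Rabs s) by (simpl; nra). lra.
Qed.

Lemma Rabs_sin_ge_dist_PIZ y mu : (forall m : Z, mu <= Rabs (y - IZR m * PI)) ->
  0 < mu -> mu <= 0.7 -> 0.9 * mu <= Rabs (sin y).
Proof.
  intros H Hm Hm2. pose proof PI_4. pose proof PI_gt_3.
  destruct (exists_IZR_PI_within_PI2 y) as [n Hn]. rewrite <- (Rabs_sin_sub_IZR_PI y n).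
  specialize (H n). set (s := y - IZR n * PI) in *.
  pose proof (Rabs_sin_ge_cubic s ltac:(lra)).
  set (a := Rabs s) in *.
  assert (a - a^3/6 - (mu - mu^3/6) = (a - mu) * (1 - (a*a + a*mu + mu*mu)/6)) by (simpl; field).
  assert (0 <= (a - mu) * (1 - (a*a + a*mu + mu*mu)/6)).
  { apply Rmult_le_pos. lra. assert (a*a <= 4) by nra. assert (a*mu <= 1.4) by nra. nra. }
  assert (mu^3 <= 0.6 * mu) by (simpl; nra).
  lra.
Qed.

Lemma cos_close_coarse u v g : 0 <= g -> Rabs (cos u - cos v) < g*g ->
  near_mod v u (5*g) \/ near_mod v (-u) (5*g).
Proof.
  intros Hg H. rewrite form2 in H.
  pose proof PI_gt_3. pose proof PI_4.
  destruct (exists_IZR_PI_within_PI2 ((u-v)/2)) as [n2 H2'].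
  destruct (exists_IZR_PI_within_PI2 ((u+v)/2)) as [n1 H1'].
  set (Q := (u - v)/2 - IZR n2 * PI) in *. set (P := (u + v)/2 - IZR n1 * PI) in *.
  assert (SQ : Rabs Q / 3 <= Rabs (sin ((u-v)/2))).
  { rewrite <- (Rabs_sin_sub_IZR_PI _ n2). apply Rabs_sin_ge_third. unfold Q in *; lra. }
  assert (SP : Rabs P / 3 <= Rabs (sin ((u+v)/2))).
  { rewrite <- (Rabs_sin_sub_IZR_PI _ n1). apply Rabs_sin_ge_third. unfold P in *; lra. }
  rewrite !Rabs_mult in H. replace (Rabs (-2)) with 2 in H by (rewrite Rabs_left by lra; lra).
  pose proof (Rabs_pos Q). pose proof (Rabs_pos P).
  pose proof (Rabs_pos (sin ((u-v)/2))). pose proof (Rabs_pos (sin ((u+v)/2))).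
  assert (HPQ : Rabs Q * Rabs P < 4.5 * (g*g)).
  { assert (Rabs Q / 3 * (Rabs P / 3) <= Rabs (sin ((u-v)/2)) * Rabs (sin ((u+v)/2)))
      by (apply Rmult_le_compat; lra).
    nra. }
  destruct (Rlt_dec (Rabs Q) (2.2*g)) as [HQ|HQ].
  - left. exists (- n2)%Z. rewrite opp_IZR.
    replace (v - u - 2*PI*(- IZR n2)) with (-(2*Q)) by (unfold Q; field).
    rewrite Rabs_Ropp, Rabs_mult, (Rabs_pos_eq 2) by lra. lra.
  - right. assert (HP : Rabs P < 2.2*g).
    { destruct (Rlt_dec (Rabs P) (2.2*g)); auto. exfalso. nra. }
    exists n1.
    replace (v - - u - 2*PI*IZR n1) with (2*P) by (unfold P; field).
    rewrite Rabs_mult, (Rabs_pos_eq 2) by lra. lra.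
Qed.

(* Near [u] the derivative of [cos] has size at least about [S], which turns the coarse
   [5 g] bound into [O(g^2 / S)]. *)
Lemma cos_close_fine_shift u t g S : 0 < g -> 250*g <= S -> S <= Rabs (sin u) -> Rabs t < 5*g ->
  Rabs (cos u - cos (u + t)) < g*g -> Rabs t < 11/10*(g*g)/S.
Proof.
  intros Hg HS HSu Ht H.
  assert (E : Rabs (cos u - cos (u + t)) = 2 * (Rabs (sin (u + t/2)) * Rabs (sin (t/2)))).
  { rewrite form2.
    replace ((u - (u + t))/2) with (-(t/2)) by field.
    replace ((u + (u + t))/2) with (u + t/2) by field.
    rewrite sin_antisym, !Rabs_mult, Rabs_Ropp.
    replace (Rabs (-2)) with 2 by (rewrite Rabs_left by lra; lra). ring. }
  rewrite E in H.
  pose proof (SIN_bound u).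
  assert (S <= 1) by (apply Rle_trans with (1 := HSu); apply Rabs_le; lra).
  assert (Ht2 : Rabs (t/2) = Rabs t / 2)
    by (unfold Rdiv; rewrite Rabs_mult, (Rabs_pos_eq (/2)) by lra; ring).
  assert (A1 : 0.99 * S <= Rabs (sin (u + t/2))).
  { pose proof (Rabs_sin_add_ge u (t/2)) as L. rewrite Ht2 in L. lra. }
  assert (A2 : 0.9999 * (Rabs t / 2) <= Rabs (sin (t/2))).
  { pose proof (Rabs_sin_ge_cubic (t/2) ltac:(lra)) as L. rewrite Ht2 in L.
    pose proof (Rabs_pos t).
    assert (Ha2 : (Rabs t / 2)*(Rabs t / 2) <= (2.5*g)^2) by (simpl; nra).
    assert ((Rabs t / 2)^3 <= (Rabs t / 2) * (2.5*g)^2).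
    { replace ((Rabs t / 2)^3) with ((Rabs t / 2) * ((Rabs t / 2)*(Rabs t / 2))) by ring.
      apply Rmult_le_compat_l; lra. }
    assert ((2.5*g)^2 <= 0.0006) by (simpl; nra).
    nra. }
  pose proof (Rabs_pos t).
  assert (B1 : 0.99 * S * (0.9999 * (Rabs t / 2)) <= Rabs (sin (u + t/2)) * Rabs (sin (t/2)))
    by (apply Rmult_le_compat; nra).
  assert (B2 : Rabs t * S * 0.98 < g*g) by nra.
  apply Rmult_lt_reg_r with S; [lra|].
  replace (11/10*(g*g)/S*S) with (11/10*(g*g)) by (field; lra).
  nra.
Qed.

Lemma cos_close_fine u v g S : 0 < g -> 250*g <= S -> S <= Rabs (sin u) ->
  Rabs (cos u - cos v) < g*g ->
  (near_mod v u (5*g) -> near_mod v u (11/10*(g*g)/S)) /\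
  (near_mod v (-u) (5*g) -> near_mod v (-u) (11/10*(g*g)/S)).
Proof.
  intros Hg HS HSu H. split.
  - intros [k Hk]. exists k. set (t := v - u - 2*PI*IZR k) in *.
    replace v with (u + t + 2*PI*IZR k) in H by (unfold t; ring).
    rewrite cos_add_2PI_IZR in H.
    exact (cos_close_fine_shift u t g S Hg HS HSu Hk H).
  - intros [k Hk]. exists k. set (t := v - - u - 2*PI*IZR k) in *.
    replace v with (-(u + - t) + 2*PI*IZR k) in H by (unfold t; ring).
    rewrite cos_add_2PI_IZR, <- cos_sym in H.
    rewrite <- Rabs_Ropp in Hk |- *.
    exact (cos_close_fine_shift u (-t) g S Hg HS HSu Hk H).
Qed.

(** * Reflections and the multiples of π/3 *)

Definition phi_idx (a : nat) : Z := match a with 1%nat => 0%Z | 2%nat => 2%Z | _ => (-2)%Z end.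

Ltac case_dir a := let H := fresh in
  assert (H : a = 1%nat \/ a = 2%nat \/ a = 3%nat) by lia; destruct H as [->|[->| ->]].

Lemma phi_idx_spec a : phi a = IZR (phi_idx a) * (PI/3).
Proof. destruct a as [|[|[|a]]]; simpl; lra. Qed.

(* A composition of reflections [x ↦ 2 phi_a - x] is [x ↦ e x + n (2π/3)] with [e = ±1];
   it is encoded by the pair [(e, n)]. *)
Definition aff_eval (p : Z*Z) (x : R) : R := IZR (fst p) * x + IZR (snd p) * (2*PI/3).
Definition aff_reflect (a : nat) (p : Z*Z) : Z*Z := ((- fst p)%Z, (phi_idx a - snd p)%Z).
Definition aff_reflect_if (a : nat) (b : bool) (p : Z*Z) : Z*Z := if b then aff_reflect a p else p.
Definition aff_id : Z*Z := (1%Z, 0%Z).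
Definition aff_unit (p : Z*Z) : Prop := fst p = 1%Z \/ fst p = (-1)%Z.

Lemma aff_eval_reflect a p x : 2 * phi a - aff_eval p x = aff_eval (aff_reflect a p) x.
Proof. unfold aff_eval, aff_reflect; simpl. rewrite phi_idx_spec, opp_IZR, minus_IZR. field. Qed.

Lemma aff_eval_id x : aff_eval aff_id x = x.
Proof. unfold aff_eval, aff_id; simpl. field. Qed.

Lemma aff_unit_reflect_if a b p : aff_unit p -> aff_unit (aff_reflect_if a b p).
Proof. unfold aff_unit, aff_reflect_if, aff_reflect; destruct b; simpl; lia. Qed.

Lemma aff_unit_id : aff_unit aff_id.
Proof. left; reflexivity. Qed.

Definition far_PI3 (x mu : R) : Prop := forall n : Z, mu <= Rabs (x - IZR n * (PI/3)).

(* Equality of the two maps at a point far from [π/3 Z], resp. at a point near [m π/3]. *)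
Definition aff_equiv_far (p1 p2 : Z*Z) : Prop :=
  fst p1 = fst p2 /\ ((snd p1 - snd p2) mod 3 = 0)%Z.
Definition aff_equiv_near (m : Z) (p1 p2 : Z*Z) : Prop :=
  ((fst p1 * m + 2 * snd p1 - fst p2 * m - 2 * snd p2) mod 6 = 0)%Z.

Lemma near_aff_far_equiv x mu p1 p2 D : far_PI3 x mu -> aff_unit p1 -> aff_unit p2 ->
  near_mod (aff_eval p1 x) (aff_eval p2 x) D -> D < 2*mu -> D <= 1 -> aff_equiv_far p1 p2.
Proof.
  intros HF H1 H2 [k Hk] HD1 HD2. pose proof PI_gt_3.
  destruct p1 as [e1 n1], p2 as [e2 n2]. unfold aff_unit, aff_eval, aff_equiv_far in *; simpl in *.
  destruct H1 as [->| ->]; destruct H2 as [->| ->]; simpl in Hk.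
  - assert (E : (n1 - n2 - 3*k)%Z = 0%Z).
    { apply (IZR_mul_small_eq_0 _ (2*PI/3)). lra. push_IZR. simpl.
      replace ((IZR n1 - IZR n2 - 3 * IZR k) * (2 * PI / 3)) with
        (1 * x + IZR n1 * (2 * PI / 3) - (1 * x + IZR n2 * (2 * PI / 3)) - 2 * PI * IZR k) by field.
      lra. }
    split; auto. Z.div_mod_to_equations; lia.
  - exfalso. specialize (HF (n2 - n1 + 3*k)%Z). revert HF. push_IZR. simpl.
    replace (1 * x + IZR n1 * (2 * PI / 3) - (-1 * x + IZR n2 * (2 * PI / 3)) - 2 * PI * IZR k)
      with (2 * (x - (IZR n2 - IZR n1 + 3 * IZR k) * (PI / 3))) in Hk by field.
    rewrite Rabs_mult, Rabs_pos_eq in Hk by lra. lra.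
  - exfalso. specialize (HF (n1 - n2 - 3*k)%Z). revert HF. push_IZR. simpl.
    replace (-1 * x + IZR n1 * (2 * PI / 3) - (1 * x + IZR n2 * (2 * PI / 3)) - 2 * PI * IZR k)
      with (-(2 * (x - (IZR n1 - IZR n2 - 3 * IZR k) * (PI / 3)))) in Hk by field.
    rewrite Rabs_Ropp, Rabs_mult, Rabs_pos_eq in Hk by lra. lra.
  - assert (E : (n1 - n2 - 3*k)%Z = 0%Z).
    { apply (IZR_mul_small_eq_0 _ (2*PI/3)). lra. push_IZR. simpl.
      replace ((IZR n1 - IZR n2 - 3 * IZR k) * (2 * PI / 3)) with
        (-1 * x + IZR n1 * (2 * PI / 3) - (-1 * x + IZR n2 * (2 * PI / 3)) - 2 * PI * IZR k) by field.
      lra. }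
    split; auto. Z.div_mod_to_equations; lia.
Qed.

Lemma aff_equiv_far_near x p1 p2 d : aff_equiv_far p1 p2 -> 0 < d ->
  near_mod (aff_eval p1 x) (aff_eval p2 x) d.
Proof.
  intros [E M] Hd. destruct p1 as [e1 n1], p2 as [e2 n2]. unfold aff_eval in *; simpl in *. subst e2.
  assert (Q : exists q, (n1 - n2 = 3*q)%Z) by (exists ((n1 - n2)/3)%Z; Z.div_mod_to_equations; lia).
  destruct Q as [q Q]. exists q.
  replace (IZR e1 * x + IZR n1 * (2 * PI / 3) - (IZR e1 * x + IZR n2 * (2 * PI / 3)) - 2 * PI * IZR q)
    with ((IZR (n1 - n2) - 3 * IZR q) * (2*PI/3)) by (push_IZR; field).
  rewrite Q. push_IZR. simpl. replace ((3 * IZR q - 3 * IZR q) * (2 * PI / 3)) with 0 by field.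
  rewrite Rabs_R0; auto.
Qed.

Lemma near_PI3_decomp x m eta : near_mod x (IZR m * (PI/3)) eta ->
  exists d k, x = IZR m * (PI/3) + d + 2*PI*IZR k /\ -eta < d < eta.
Proof.
  intros [k Hk]. exists (x - IZR m * (PI / 3) - 2 * PI * IZR k), k.
  split; [ring | apply Rabs_lt_iff; auto].
Qed.

Lemma near_aff_near_equiv x m eta p1 p2 D : near_mod x (IZR m * (PI/3)) eta ->
  aff_unit p1 -> aff_unit p2 ->
  near_mod (aff_eval p1 x) (aff_eval p2 x) D -> D + 2*eta <= 1 -> aff_equiv_near m p1 p2.
Proof.
  intros Hx H1 H2 [k Hk] HD. pose proof PI_gt_3.
  destruct (near_PI3_decomp _ _ _ Hx) as [d [k0 [Ex Hd]]].
  destruct p1 as [e1 n1], p2 as [e2 n2]. unfold aff_unit, aff_eval, aff_equiv_near in *; cbn [fst snd] in *.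
  destruct H1 as [->| ->]; destruct H2 as [->| ->]; rewrite Ex in Hk; apply Rabs_lt_iff in Hk.
  - assert (E : (2*n1 - 2*n2 - 6*k)%Z = 0%Z).
    { apply (IZR_mul_small_eq_0 _ (PI/3)). lra. push_IZR. apply Rabs_lt_iff. split; lra. }
    Z.div_mod_to_equations; lia.
  - assert (E : (2*m + 2*n1 - 2*n2 + 12*k0 - 6*k)%Z = 0%Z).
    { apply (IZR_mul_small_eq_0 _ (PI/3)). lra. push_IZR. apply Rabs_lt_iff. split; lra. }
    Z.div_mod_to_equations; lia.
  - assert (E : (-2*m + 2*n1 - 2*n2 - 12*k0 - 6*k)%Z = 0%Z).
    { apply (IZR_mul_small_eq_0 _ (PI/3)). lra. push_IZR. apply Rabs_lt_iff. split; lra. }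
    Z.div_mod_to_equations; lia.
  - assert (E : (2*n1 - 2*n2 - 6*k)%Z = 0%Z).
    { apply (IZR_mul_small_eq_0 _ (PI/3)). lra. push_IZR. apply Rabs_lt_iff. split; lra. }
    Z.div_mod_to_equations; lia.
Qed.

Lemma aff_equiv_near_near x m eta p1 p2 : near_mod x (IZR m * (PI/3)) eta ->
  aff_unit p1 -> aff_unit p2 -> 0 < eta ->
  aff_equiv_near m p1 p2 -> near_mod (aff_eval p1 x) (aff_eval p2 x) (2*eta).
Proof.
  intros Hx H1 H2 He HR.
  destruct (near_PI3_decomp _ _ _ Hx) as [d [k0 [Ex Hd]]].
  destruct p1 as [e1 n1], p2 as [e2 n2]. unfold aff_unit, aff_eval, aff_equiv_near in *; cbn [fst snd] in *.
  assert (Q : exists q, ((e1 * m + 2 * n1 - e2 * m - 2 * n2) = 6*q)%Z)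
    by (exists ((e1 * m + 2 * n1 - e2 * m - 2 * n2)/6)%Z; Z.div_mod_to_equations; lia).
  destruct Q as [q Q]. clear HR.
  assert (Hq : forall c, c = (6*q)%Z -> IZR c * (PI/3) = 2*PI*IZR q)
    by (intros c ->; rewrite mult_IZR; simpl; field).
  destruct H1 as [->| ->]; destruct H2 as [->| ->]; rewrite Ex.
  - exists q. pose proof (Hq (2*n1 - 2*n2)%Z ltac:(lia)) as E. revert E; push_IZR; intro E.
    apply Rabs_lt_iff. split; lra.
  - exists (q + 2*k0)%Z. pose proof (Hq (2*m + 2*n1 - 2*n2)%Z ltac:(lia)) as E. revert E; push_IZR; intro E.
    apply Rabs_lt_iff. split; lra.
  - exists (q - 2*k0)%Z. pose proof (Hq (-2*m + 2*n1 - 2*n2)%Z ltac:(lia)) as E. revert E; push_IZR; intro E.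
    apply Rabs_lt_iff. split; lra.
  - exists q. pose proof (Hq (2*n1 - 2*n2)%Z ltac:(lia)) as E. revert E; push_IZR; intro E.
    apply Rabs_lt_iff. split; lra.
Qed.

(* [A] ([B]) records whether the [a]-edge ([b]-edge) at the corner is a reflection, [A'] and
   [B'] the same for the opposite edges: if both paths around the plaquette give equivalent
   maps, then opposite edges agree and the two edges at the corner are not both reflections. *)
Definition plaquette_rule (Rl : Z*Z -> Z*Z -> Prop) (a b : nat) : Prop :=
  forall A B A' B' : bool,
  Rl (aff_reflect_if b B' (aff_reflect_if a A aff_id)) (aff_reflect_if a A' (aff_reflect_if b B aff_id)) ->
  ((~ Rl (aff_reflect_if a A aff_id) aff_id <->
    ~ Rl (aff_reflect_if a A' (aff_reflect_if b B aff_id)) (aff_reflect_if b B aff_id)) /\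
   (~ Rl (aff_reflect_if b B aff_id) aff_id <->
    ~ Rl (aff_reflect_if b B' (aff_reflect_if a A aff_id)) (aff_reflect_if a A aff_id)) /\
   ~ (~ Rl (aff_reflect_if a A aff_id) aff_id /\ ~ Rl (aff_reflect_if b B aff_id) aff_id)).

Lemma plaquette_rule_far a b : (1 <= a <= 3)%nat -> (1 <= b <= 3)%nat -> a <> b ->
  plaquette_rule aff_equiv_far a b.
Proof.
  intros Ha Hb Hab A B A' B'. case_dir a; case_dir b; try lia;
  destruct A, B, A', B'; unfold aff_equiv_far, aff_reflect_if, aff_reflect, aff_id, phi_idx;
  cbn [fst snd]; intro H; Z.div_mod_to_equations; repeat split; intros; lia.
Qed.

Lemma plaquette_rule_near m a b : (1 <= a <= 3)%nat -> (1 <= b <= 3)%nat -> a <> b ->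
  plaquette_rule (aff_equiv_near m) a b.
Proof.
  intros Ha Hb Hab A B A' B'. case_dir a; case_dir b; try lia;
  destruct A, B, A', B'; unfold aff_equiv_near, aff_reflect_if, aff_reflect, aff_id, phi_idx;
  cbn [fst snd]; intro H; Z.div_mod_to_equations; repeat split; intros; lia.
Qed.

Lemma phi_idx_escape a d t t' : (1 <= a <= 3)%nat -> (1 <= d <= 3)%nat -> d <> a ->
  ((t' - (2 * phi_idx a - t)) mod 6 = 0)%Z -> ((t - phi_idx a) mod 3 <> 0)%Z ->
  ((t - phi_idx d) mod 3 <> 0)%Z \/ ((t' - phi_idx d) mod 3 <> 0)%Z.
Proof.
  intros Ha Hd N H1 H2. case_dir a; case_dir d; try lia; unfold phi_idx in *;
    Z.div_mod_to_equations; lia.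
Qed.

Lemma far_PI3_sin_ge x mu a : far_PI3 x mu -> 0 < mu -> mu <= 0.7 ->
  0.9 * mu <= Rabs (sin (x - phi a)).
Proof.
  intros HF H1 H2. apply Rabs_sin_ge_dist_PIZ; auto. intro m. rewrite phi_idx_spec.
  specialize (HF (phi_idx a + 3*m)%Z). revert HF. push_IZR.
  replace (x - (IZR (phi_idx a) + 3 * IZR m) * (PI / 3))
    with (x - IZR (phi_idx a) * (PI / 3) - IZR m * PI) by field.
  auto.
Qed.

(* [t ≢ phi_idx a (mod 3)] keeps [x - phi a] about [π/3] away from [π Z]. *)
Lemma near_PI3_sin_ge x t eta a : near_mod x (IZR t * (PI/3)) eta -> 0 < eta -> eta <= 0.3 ->
  ((t - phi_idx a) mod 3 <> 0)%Z -> 0.63 <= Rabs (sin (x - phi a)).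
Proof.
  intros Hx He1 He2 Ht. pose proof PI_gt_3.
  replace 0.63 with (0.9 * 0.7) by lra. apply Rabs_sin_ge_dist_PIZ; try lra. intro m.
  destruct (near_PI3_decomp _ _ _ Hx) as [d [k0 [Ex Hd]]].
  set (L := (t - phi_idx a - 3*m + 6*k0)%Z).
  assert (NL : L <> 0%Z) by (unfold L; intro; apply Ht; Z.div_mod_to_equations; lia).
  replace (x - phi a - IZR m * PI) with (IZR L * (PI/3) + d)
    by (rewrite Ex, phi_idx_spec; unfold L; push_IZR; field).
  pose proof (Rabs_IZR_ge_1 L NL).
  assert (PI/3 <= Rabs (IZR L * (PI/3))) by (rewrite Rabs_mult, (Rabs_pos_eq (PI/3)) by lra; nra).
  pose proof (Rabs_triang_inv (IZR L * (PI/3)) (-d)).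
  replace (IZR L * (PI / 3) - - d) with (IZR L * (PI / 3) + d) in * by ring.
  rewrite Rabs_Ropp in *. assert (Rabs d < eta) by (apply Rabs_lt_iff; lra). lra.
Qed.

Lemma Rabs_ge_of_close A B e mu : mu <= Rabs A -> Rabs (B - A) < e -> mu - e <= Rabs B.
Proof.
  intros H1 H2. pose proof (Rabs_triang_inv A (A - B)).
  replace (A - (A - B)) with B in H by ring. rewrite <- Rabs_Ropp in H2.
  replace (- (B - A)) with (A - B) in H2 by ring. lra.
Qed.

Definition near_or_reflect (a : nat) (y x e : R) : Prop :=
  near_mod y x e \/ near_mod y (2*phi a - x) e.

Lemma far_PI3_step x y mu e a : far_PI3 x mu ->
  near_or_reflect a y x e -> far_PI3 y (mu - e).
Proof.
  intros HF [[k Hk]|[k Hk]] n.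
  - specialize (HF (n - 6*k)%Z). apply (Rabs_ge_of_close _ _ _ _ HF).
    revert Hk. push_IZR. intro Hk.
    replace (y - IZR n * (PI / 3) - (x - (IZR n - 6 * IZR k) * (PI / 3)))
      with (y - x - 2*PI*IZR k) by field. auto.
  - specialize (HF (2*phi_idx a - n + 6*k)%Z). rewrite <- Rabs_Ropp in HF.
    apply (Rabs_ge_of_close _ _ _ _ HF). revert Hk. rewrite phi_idx_spec. push_IZR. intro Hk.
    replace (y - IZR n * (PI / 3) - - (x - (2 * IZR (phi_idx a) - IZR n + 6 * IZR k) * (PI / 3)))
      with (y - (2 * (IZR (phi_idx a) * (PI / 3)) - x) - 2 * PI * IZR k) by field. auto.
Qed.

Lemma far_PI3_weaken x m1 m2 : far_PI3 x m1 -> m2 <= m1 -> far_PI3 x m2.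
Proof. intros H Hm n. specialize (H n). lra. Qed.

Lemma far_PI3_reflect_not_near x mu e a : far_PI3 x mu -> near_mod (2*phi a - x) x e -> 2*mu < e.
Proof.
  intros HF [k Hk]. specialize (HF (phi_idx a - 3*k)%Z). revert HF. push_IZR.
  rewrite phi_idx_spec in Hk. intro HF.
  replace (2 * (IZR (phi_idx a) * (PI / 3)) - x - x - 2 * PI * IZR k)
    with (- (2 * (x - (IZR (phi_idx a) - 3 * IZR k) * (PI / 3)))) in Hk by field.
  rewrite Rabs_Ropp, Rabs_mult, (Rabs_pos_eq 2) in Hk by lra. lra.
Qed.

Lemma reflect_IZR_PI3 a n : 2 * phi a - IZR n * (PI/3) = IZR (2 * phi_idx a - n) * (PI/3).
Proof. rewrite phi_idx_spec. push_IZR. field. Qed.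

Lemma reflect_reflect a x : 2*phi a - (2*phi a - x) = x.
Proof. ring. Qed.

Lemma near_PI3_step x y n h e a : near_mod x (IZR n * (PI/3)) h ->
  near_or_reflect a y x e -> exists n', near_mod y (IZR n' * (PI/3)) (e + h).
Proof.
  intros Hx [H|H].
  - exists n. eapply near_mod_trans; eauto.
  - exists (2 * phi_idx a - n)%Z. rewrite <- reflect_IZR_PI3.
    eapply near_mod_trans; [exact H | apply near_mod_reflect; auto].
Qed.

Lemma near_PI3_unique x n1 n2 h1 h2 : near_mod x (IZR n1 * (PI/3)) h1 ->
  near_mod x (IZR n2 * (PI/3)) h2 -> h1 + h2 <= 1 -> ((n1 - n2) mod 6 = 0)%Z.
Proof.
  intros H1 H2 Hh. pose proof PI_gt_3.
  destruct (near_mod_trans _ _ _ _ _ (near_mod_sym _ _ _ H1) H2) as [k Hk].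
  assert (E : (n1 - n2 - 6*k)%Z = 0%Z).
  { apply (IZR_mul_small_eq_0 _ (PI/3)). lra. push_IZR.
    replace ((IZR n1 - IZR n2 - 6 * IZR k) * (PI / 3))
      with (IZR n1 * (PI / 3) - IZR n2 * (PI / 3) - 2 * PI * IZR k) by field.
    lra. }
  Z.div_mod_to_equations; lia.
Qed.

Lemma near_PI3_mod6 x n1 n2 h : ((n1 - n2) mod 6 = 0)%Z ->
  near_mod x (IZR n1 * (PI/3)) h -> near_mod x (IZR n2 * (PI/3)) h.
Proof.
  intros Hm H.
  assert (Q : exists q, (n2 = n1 + 6*q)%Z) by (exists (-((n1 - n2)/6))%Z; Z.div_mod_to_equations; lia).
  destruct Q as [q ->].
  replace (IZR (n1 + 6*q) * (PI/3)) with (IZR n1 * (PI/3) + 2*PI*IZR q) by (push_IZR; field).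
  apply near_mod_add_2PI; auto.
Qed.

Lemma near_or_reflect_aff_id a x y e : near_or_reflect a y x e ->
  exists A, near_mod y (aff_eval (aff_reflect_if a A aff_id) x) e.
Proof.
  intros [H|H].
  - exists false. simpl. rewrite aff_eval_id. auto.
  - exists true. simpl. rewrite <- aff_eval_reflect, aff_eval_id. auto.
Qed.

Lemma near_or_reflect_aff a x y z p e e' : near_or_reflect a y z e ->
  near_mod z (aff_eval p x) e' -> exists A, near_mod y (aff_eval (aff_reflect_if a A p) x) (e + e').
Proof.
  intros [H|H] Hz.
  - exists false. simpl. eapply near_mod_trans; eauto.
  - exists true. simpl. rewrite <- aff_eval_reflect.
    eapply near_mod_trans; [exact H | apply near_mod_reflect; auto].
Qed.

Section Plaquette.

Variables (Rl : Z*Z -> Z*Z -> Prop) (x nu D : R).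
Hypothesis near_equiv : forall p1 p2, aff_unit p1 -> aff_unit p2 ->
  near_mod (aff_eval p1 x) (aff_eval p2 x) D -> Rl p1 p2.
Hypothesis equiv_near : forall p1 p2, aff_unit p1 -> aff_unit p2 -> Rl p1 p2 ->
  near_mod (aff_eval p1 x) (aff_eval p2 x) nu.

Lemma not_near_iff_not_equiv y z p q e1 e2 rho : aff_unit p -> aff_unit q ->
  near_mod y (aff_eval p x) e1 -> near_mod z (aff_eval q x) e2 ->
  e1 + e2 + nu <= rho -> rho + e1 + e2 <= D ->
  (~ near_mod y z rho <-> ~ Rl p q).
Proof.
  intros Hp Hq Hy Hz H1 H2. split.
  - intros N HR. apply N. apply near_mod_weaken with (e1 + nu + e2); [|lra].
    exact (near_mod_trans _ _ _ _ _ (near_mod_trans _ _ _ _ _ Hy (equiv_near p q Hp Hq HR))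
             (near_mod_sym _ _ _ Hz)).
  - intros N Hn. apply N. apply near_equiv; auto. apply near_mod_weaken with (e1 + rho + e2); [|lra].
    exact (near_mod_trans _ _ _ _ _ (near_mod_trans _ _ _ _ _ (near_mod_sym _ _ _ Hy) Hn) Hz).
Qed.

(* The corners of a plaquette carry [x] (at [r]), [p] (at [r + e_a]), [q] (at [r + e_b]) and
   [w] (at [r + e_a + e_b]); an edge is a flip when its endpoints are [rho]-apart. *)
Lemma plaquette (p q w ec rho : R) (a b : nat) : plaquette_rule Rl a b ->
  0 < ec -> 0 <= nu -> 3*ec + nu <= rho -> rho + 4*ec <= D ->
  near_or_reflect a p x ec -> near_or_reflect b q x ec ->
  near_or_reflect b w p ec -> near_or_reflect a w q ec ->
  (~ near_mod p x rho <-> ~ near_mod w q rho) /\ (~ near_mod q x rho <-> ~ near_mod w p rho) /\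
  ~ (~ near_mod p x rho /\ ~ near_mod q x rho).
Proof.
  intros HC Hec Hnu H1 H2 Ep Eq Ew1 Ew2.
  destruct (near_or_reflect_aff_id _ _ _ _ Ep) as [A HA].
  destruct (near_or_reflect_aff_id _ _ _ _ Eq) as [B HB].
  destruct (near_or_reflect_aff _ _ _ _ _ _ _ Ew1 HA) as [B' HB'].
  destruct (near_or_reflect_aff _ _ _ _ _ _ _ Ew2 HB) as [A' HA'].
  assert (okA : aff_unit (aff_reflect_if a A aff_id)) by (apply aff_unit_reflect_if, aff_unit_id).
  assert (okB : aff_unit (aff_reflect_if b B aff_id)) by (apply aff_unit_reflect_if, aff_unit_id).
  assert (okW1 : aff_unit (aff_reflect_if b B' (aff_reflect_if a A aff_id))) by (apply aff_unit_reflect_if; auto).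
  assert (okW2 : aff_unit (aff_reflect_if a A' (aff_reflect_if b B aff_id))) by (apply aff_unit_reflect_if; auto).
  assert (HR : Rl (aff_reflect_if b B' (aff_reflect_if a A aff_id))
                  (aff_reflect_if a A' (aff_reflect_if b B aff_id))).
  { apply near_equiv; auto. apply near_mod_weaken with ((ec+ec) + (ec+ec)); [|lra].
    exact (near_mod_trans _ _ _ _ _ (near_mod_sym _ _ _ HB') HA'). }
  destruct (HC A B A' B' HR) as [C1 [C2 C3]].
  assert (Hx : near_mod x (aff_eval aff_id x) ec) by (rewrite aff_eval_id; apply near_mod_refl; auto).
  rewrite (not_near_iff_not_equiv p x _ _ ec ec rho okA aff_unit_id HA Hx) by lra.
  rewrite (not_near_iff_not_equiv w q _ _ (ec+ec) ec rho okW2 okB HA' HB) by lra.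
  rewrite (not_near_iff_not_equiv q x _ _ ec ec rho okB aff_unit_id HB Hx) by lra.
  rewrite (not_near_iff_not_equiv w p _ _ (ec+ec) ec rho okW1 okA HB' HA) by lra.
  auto.
Qed.

End Plaquette.

(** * Geometry of the box *)

Definition upd (a v : nat) (r : site) : site :=
  match r with (x, y, z) =>
    match a with 1%nat => (v, y, z) | 2%nat => (x, v, z) | _ => (x, y, v) end end.

Definition base (a j : nat) : site :=
  match a with 1%nat => (j, 0, 0)%nat | 2%nat => (0, j, 0)%nat | _ => (0, 0, j)%nat end.

Ltac case_site r := let x := fresh "x" in let y := fresh "y" in let z := fresh "z" in
  destruct r as [[x y] z].

Lemma shift_comm a b r : (1 <= a <= 3)%nat -> (1 <= b <= 3)%nat ->
  shift a (shift b r) = shift b (shift a r).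
Proof. intros Ha Hb. case_dir a; case_dir b; case_site r; reflexivity. Qed.

Lemma coord_shift_same a r : (1 <= a <= 3)%nat -> coord a (shift a r) = S (coord a r).
Proof. intros Ha. case_dir a; case_site r; reflexivity. Qed.

Lemma coord_shift_other a b r : (1 <= a <= 3)%nat -> (1 <= b <= 3)%nat -> a <> b ->
  coord a (shift b r) = coord a r.
Proof. intros Ha Hb N. case_dir a; case_dir b; try lia; case_site r; reflexivity. Qed.

Lemma in_box_shift B a r : (1 <= a <= 3)%nat -> in_box B r -> (coord a r < B)%nat ->
  in_box B (shift a r).
Proof. intros Ha. case_dir a; case_site r; unfold in_box; simpl; lia. Qed.

Lemma in_box_shift_lt B a r : (1 <= a <= 3)%nat -> in_box B (shift a r) -> (coord a r < B)%nat.
Proof. intros Ha. case_dir a; case_site r; unfold in_box; simpl; lia. Qed.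

Lemma coord_upd_same a v r : (1 <= a <= 3)%nat -> coord a (upd a v r) = v.
Proof. intros Ha. case_dir a; case_site r; reflexivity. Qed.

Lemma coord_upd_other a b v r : (1 <= a <= 3)%nat -> (1 <= b <= 3)%nat -> a <> b ->
  coord a (upd b v r) = coord a r.
Proof. intros Ha Hb N. case_dir a; case_dir b; try lia; case_site r; reflexivity. Qed.

Lemma in_box_upd B b v r : (1 <= b <= 3)%nat -> in_box B r -> (v <= B)%nat -> in_box B (upd b v r).
Proof. intros Hb. case_dir b; case_site r; unfold in_box; simpl; lia. Qed.

Lemma shift_upd b v r : (1 <= b <= 3)%nat -> shift b (upd b v r) = upd b (S v) r.
Proof. intros Hb. case_dir b; case_site r; reflexivity. Qed.

Lemma upd_coord b r : (1 <= b <= 3)%nat -> upd b (coord b r) r = r.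
Proof. intros Hb. case_dir b; case_site r; reflexivity. Qed.

Lemma shift_upd_pred a r : (1 <= a <= 3)%nat -> (1 <= coord a r)%nat ->
  shift a (upd a (coord a r - 1) r) = r.
Proof. intros Ha. case_dir a; case_site r; simpl; intro; f_equal; try f_equal; lia. Qed.

Lemma coord_base a j : (1 <= a <= 3)%nat -> coord a (base a j) = j.
Proof. intros Ha. case_dir a; reflexivity. Qed.

Lemma in_box_base B a j : (1 <= a <= 3)%nat -> (j <= B)%nat -> in_box B (base a j).
Proof. intros Ha. case_dir a; unfold in_box; simpl; lia. Qed.

Lemma shift_base a j : (1 <= a <= 3)%nat -> shift a (base a j) = base a (S j).
Proof. intros Ha. case_dir a; reflexivity. Qed.

Lemma iff_chain (P : nat -> Prop) N : (forall n, (n < N)%nat -> (P n <-> P (S n))) ->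
  forall n, (n <= N)%nat -> (P n <-> P 0%nat).
Proof.
  intros H n. induction n as [|n IH]; intro Hn; [tauto|].
  rewrite <- IH by lia. symmetry. apply H. lia.
Qed.

(* [flip a r] abstracts "the [a]-edge at [r] is a reflection". *)
Section Flips.

Variables (B : nat) (flip : nat -> site -> Prop).
Hypothesis flip_plaquette : forall a b r, (1 <= a <= 3)%nat -> (1 <= b <= 3)%nat -> a <> b ->
  in_box B r -> (coord a r < B)%nat -> (coord b r < B)%nat ->
  (flip a r <-> flip a (shift b r)) /\ ~ (flip a r /\ flip b r).

Lemma flip_iff_upd a b r v : (1 <= a <= 3)%nat -> (1 <= b <= 3)%nat -> a <> b -> in_box B r ->
  (coord a r < B)%nat -> (v <= B)%nat -> (flip a r <-> flip a (upd b v r)).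
Proof.
  intros Ha Hb N Hr Hc Hv.
  assert (Hc' : (coord b r <= B)%nat)
    by (clear -Hr Hb; case_dir b; case_site r; unfold in_box in *; simpl in *; lia).
  assert (CH : forall n, (n <= B)%nat -> (flip a (upd b n r) <-> flip a (upd b 0 r))).
  { apply iff_chain. intros n Hn. rewrite <- shift_upd by auto.
    assert (Hin : in_box B (upd b n r)) by (apply in_box_upd; auto; lia).
    eapply proj1. apply (flip_plaquette a b (upd b n r) Ha Hb N Hin).
    - rewrite coord_upd_other; auto.
    - rewrite coord_upd_same; auto. }
  rewrite <- (upd_coord b r) at 1 by auto.
  rewrite (CH (coord b r)) by auto. rewrite (CH v) by auto. tauto.
Qed.

Lemma flip_layer a r r' : (1 <= a <= 3)%nat -> in_box B r -> (coord a r < B)%nat ->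
  in_box B r' -> coord a r' = coord a r -> flip a r -> flip a r'.
Proof.
  intros Ha Hr Hc Hr' E F.
  destruct r as [[x y] z], r' as [[x' y'] z']. unfold in_box in *; simpl in *.
  case_dir a; simpl in *.
  - rewrite (flip_iff_upd 1 2 _ y') in F by (unfold in_box in *; simpl; lia). simpl in F.
    rewrite (flip_iff_upd 1 3 _ z') in F by (unfold in_box in *; simpl; lia). simpl in F. subst; auto.
  - rewrite (flip_iff_upd 2 1 _ x') in F by (unfold in_box in *; simpl; lia). simpl in F.
    rewrite (flip_iff_upd 2 3 _ z') in F by (unfold in_box in *; simpl; lia). simpl in F. subst; auto.
  - rewrite (flip_iff_upd 3 1 _ x') in F by (unfold in_box in *; simpl; lia). simpl in F.
    rewrite (flip_iff_upd 3 2 _ y') in F by (unfold in_box in *; simpl; lia). simpl in F. subst; auto.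
Qed.

Lemma flip_dir_unique a b r r' : (1 <= a <= 3)%nat -> (1 <= b <= 3)%nat ->
  in_box B r -> (coord a r < B)%nat -> in_box B r' -> (coord b r' < B)%nat ->
  flip a r -> flip b r' -> a = b.
Proof.
  intros Ha Hb Hr Hc Hr' Hc' F1 F2. destruct (Nat.eq_dec a b) as [|N]; auto. exfalso.
  set (q := upd b (coord b r') r).
  assert (Hq : in_box B q) by (apply in_box_upd; auto; lia).
  assert (Q1 : coord a q = coord a r) by (apply coord_upd_other; auto).
  assert (Q2 : coord b q = coord b r') by (apply coord_upd_same; auto).
  assert (F1' : flip a q) by (apply (flip_layer a r q); auto).
  assert (F2' : flip b q) by (apply (flip_layer b r' q); auto; lia).
  destruct (flip_plaquette a b q Ha Hb N Hq ltac:(lia) ltac:(lia)) as [_ X]. tauto.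
Qed.

End Flips.

Lemma box_path_induction B (P : site -> nat -> Prop) :
  P (0,0,0)%nat 0%nat ->
  (forall a r k, (1 <= a <= 3)%nat -> in_box B r -> in_box B (shift a r) -> P r k -> P (shift a r) (S k)) ->
  forall r, in_box B r -> exists k, (k <= 3*B)%nat /\ P r k.
Proof.
  intros H0 HS [[x y] z] Hr. unfold in_box in Hr; simpl in Hr.
  assert (A1 : forall x', (x' <= x)%nat -> P (x',0,0)%nat x').
  { induction x'; intro; auto.
    apply (HS 1%nat (x',0,0)%nat); try (unfold in_box; simpl; lia). apply IHx'; lia. }
  assert (A2 : forall y', (y' <= y)%nat -> P (x,y',0)%nat (x+y')%nat).
  { induction y'; intro. rewrite Nat.add_0_r; auto.
    replace (x + S y')%nat with (S (x + y')) by lia.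
    apply (HS 2%nat (x,y',0)%nat); try (unfold in_box; simpl; lia). apply IHy'; lia. }
  assert (A3 : forall z', (z' <= z)%nat -> P (x,y,z')%nat (x+y+z')%nat).
  { induction z'; intro. rewrite Nat.add_0_r; auto.
    replace (x + y + S z')%nat with (S (x + y + z')) by lia.
    apply (HS 3%nat (x,y,z')%nat); try (unfold in_box; simpl; lia). apply IHz'; lia. }
  exists (x+y+z)%nat. split; [lia | apply A3; lia].
Qed.

Lemma layer_path_induction B a j (P : site -> nat -> Prop) : (1 <= a <= 3)%nat ->
  P (base a j) 0%nat ->
  (forall d r k, (1 <= d <= 3)%nat -> d <> a -> in_box B r -> in_box B (shift d r) -> coord a r = j ->
     P r k -> P (shift d r) (S k)) ->
  forall r, in_box B r -> coord a r = j -> exists k, (k <= 2*B)%nat /\ P r k.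
Proof.
  intros Ha H0 HS [[x y] z] Hr Hj. unfold in_box in Hr; simpl in Hr.
  case_dir a; simpl in *; subst j.
  - assert (A2 : forall y', (y' <= y)%nat -> P (x,y',0)%nat y').
    { induction y'; intro; auto.
      apply (HS 2%nat (x,y',0)%nat); try (unfold in_box; simpl; lia). apply IHy'; lia. }
    assert (A3 : forall z', (z' <= z)%nat -> P (x,y,z')%nat (y+z')%nat).
    { induction z'; intro. rewrite Nat.add_0_r; auto.
      replace (y + S z')%nat with (S (y + z')) by lia.
      apply (HS 3%nat (x,y,z')%nat); try (unfold in_box; simpl; lia). apply IHz'; lia. }
    exists (y+z)%nat. split; [lia | apply A3; lia].
  - assert (A2 : forall x', (x' <= x)%nat -> P (x',y,0)%nat x').
    { induction x'; intro; auto.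
      apply (HS 1%nat (x',y,0)%nat); try (unfold in_box; simpl; lia). apply IHx'; lia. }
    assert (A3 : forall z', (z' <= z)%nat -> P (x,y,z')%nat (x+z')%nat).
    { induction z'; intro. rewrite Nat.add_0_r; auto.
      replace (x + S z')%nat with (S (x + z')) by lia.
      apply (HS 3%nat (x,y,z')%nat); try (unfold in_box; simpl; lia). apply IHz'; lia. }
    exists (x+z)%nat. split; [lia | apply A3; lia].
  - assert (A2 : forall x', (x' <= x)%nat -> P (x',0,z)%nat x').
    { induction x'; intro; auto.
      apply (HS 1%nat (x',0,z)%nat); try (unfold in_box; simpl; lia). apply IHx'; lia. }
    assert (A3 : forall y', (y' <= y)%nat -> P (x,y',z)%nat (x+y')%nat).
    { induction y'; intro. rewrite Nat.add_0_r; auto.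
      replace (x + S y')%nat with (S (x + y')) by lia.
      apply (HS 2%nat (x,y',z)%nat); try (unfold in_box; simpl; lia). apply IHy'; lia. }
    exists (x+y)%nat. split; [lia | apply A3; lia].
Qed.

Lemma INR_le_mul c B k : (k <= c*B)%nat -> INR k <= INR c * INR B.
Proof. intro H. apply le_INR in H. rewrite mult_INR in H. exact H. Qed.

Lemma box_drift B (f : site -> R) x e0 e : 0 <= e -> near_mod (f (0,0,0)%nat) x e0 ->
  (forall a r, (1 <= a <= 3)%nat -> in_box B r -> in_box B (shift a r) ->
     near_mod (f (shift a r)) (f r) e) ->
  forall r, in_box B r -> near_mod (f r) x (e0 + 3 * INR B * e).
Proof.
  intros He H0 HS r Hr.
  destruct (box_path_induction B (fun r k => near_mod (f r) x (e0 + INR k * e))) with (r := r)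
    as [k [Hk Hn]]; auto.
  - simpl. eapply near_mod_weaken; [exact H0 | lra].
  - intros a r' k Ha H1 H2 Hn. rewrite S_INR.
    eapply near_mod_weaken; [eapply near_mod_trans; [apply HS; eauto | exact Hn] | lra].
  - pose proof (INR_le_mul 3 B k Hk). simpl in *.
    eapply near_mod_weaken; [exact Hn | nra].
Qed.

Lemma layer_drift B a j (f : site -> R) x e0 e : (1 <= a <= 3)%nat -> 0 <= e ->
  near_mod (f (base a j)) x e0 ->
  (forall d r, (1 <= d <= 3)%nat -> d <> a -> in_box B r -> in_box B (shift d r) -> coord a r = j ->
     near_mod (f (shift d r)) (f r) e) ->
  forall r, in_box B r -> coord a r = j -> near_mod (f r) x (e0 + 2 * INR B * e).
Proof.
  intros Ha He H0 HS r Hr Hj.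
  destruct (layer_path_induction B a j (fun r k => near_mod (f r) x (e0 + INR k * e)) Ha)
    with (r := r) as [k [Hk Hn]]; auto.
  - simpl. eapply near_mod_weaken; [exact H0 | lra].
  - intros d r' k Hd Hda H1 H2 Hc Hn. rewrite S_INR.
    eapply near_mod_weaken; [eapply near_mod_trans; [apply HS; eauto | exact Hn] | lra].
  - pose proof (INR_le_mul 2 B k Hk). simpl in *.
    eapply near_mod_weaken; [exact Hn | nra].
Qed.

Lemma edge_coarse a x y g : Rabs (cos (x - phi a) - cos (y - phi a)) < g*g -> 0 <= g ->
  near_or_reflect a y x (5*g).
Proof.
  intros H Hg. destruct (cos_close_coarse _ _ _ Hg H) as [C|C]; [left|right];
    apply (near_mod_congr _ _ _ _ _ C); exists 0%Z; left; simpl; ring.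
Qed.

Lemma edge_fine a x y g S : Rabs (cos (x - phi a) - cos (y - phi a)) < g*g -> 0 < g ->
  250*g <= S -> S <= Rabs (sin (x - phi a)) ->
  (near_mod y x (5*g) -> near_mod y x (11/10*(g*g)/S)) /\
  (near_mod y (2*phi a - x) (5*g) -> near_mod y (2*phi a - x) (11/10*(g*g)/S)).
Proof.
  intros H Hg HS HSu. destruct (cos_close_fine _ _ _ _ Hg HS HSu H) as [F1 F2].
  split; intro N.
  - pose proof (F1 (near_mod_sub_r _ _ (phi a) _ N)) as F.
    apply (near_mod_congr _ _ _ _ _ F); exists 0%Z; left; simpl; ring.
  - assert (N' : near_mod (y - phi a) (-(x - phi a)) (5*g))
      by (apply (near_mod_congr _ _ _ _ _ N); exists 0%Z; left; simpl; ring).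
    pose proof (F2 N') as F. apply (near_mod_congr _ _ _ _ _ F); exists 0%Z; left; simpl; ring.
Qed.

Lemma near_PI3_tau (n : Z) : exists tau : nat, (1 <= tau <= 6)%nat /\
  forall x d, near_mod x (IZR n * (PI/3)) d -> near_mod x (PI/3 * INR tau) d.
Proof.
  assert (Hb : (0 <= (n-1) mod 6 < 6)%Z) by (apply Z.mod_pos_bound; lia).
  exists (Z.to_nat ((n - 1) mod 6 + 1)). split; [lia|].
  intros x d H. rewrite INR_IZR_INZ, Z2Nat.id, Rmult_comm by lia.
  apply (near_PI3_mod6 x n); auto. Z.div_mod_to_equations. lia.
Qed.

Lemma exists_theta_star_near (s : nat) (Del th0 psi : R) : 0 < Del -> INR s * Del > 4 * PI ->
  exists i, (1 <= i <= s)%nat /\ near_mod psi (theta_star th0 s i) (Del/4).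
Proof.
  intros HD Hs. pose proof PI_gt_3.
  assert (Hs0 : 0 < INR s) by (destruct (Rle_dec (INR s) 0); [nra|lra]).
  assert (Hs1 : (1 <= s)%nat) by (destruct s; [simpl in Hs0; lra | lia]).
  set (u := (psi - th0) * INR s / (2*PI)).
  destruct (archimed (u + /2)) as [A1 A2].
  set (n := (up (u + /2) - 1)%Z).
  assert (Hn : u - /2 < IZR n <= u + /2) by (unfold n; rewrite minus_IZR; simpl; lra).
  set (zs := Z.of_nat s).
  set (i := ((n - 1) mod zs + 1)%Z).
  assert (Hzs : (0 < zs)%Z) by (unfold zs; lia).
  assert (Hi : (1 <= i <= zs)%Z)
    by (unfold i; assert (0 <= (n-1) mod zs < zs)%Z by (apply Z.mod_pos_bound; lia); lia).
  assert (Q : exists q, (n = i + zs * q)%Z) by (exists ((n-1)/zs)%Z; unfold i; Z.div_mod_to_equations; lia).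
  destruct Q as [q Q].
  exists (Z.to_nat i). split; [lia|].
  exists q. unfold theta_star. rewrite INR_IZR_INZ, Z2Nat.id by lia.
  assert (Es : IZR zs = INR s) by (unfold zs; rewrite <- INR_IZR_INZ; auto).
  assert (En : IZR n = IZR i + INR s * IZR q) by (rewrite Q; push_IZR; rewrite Es; ring).
  replace (psi - (th0 + 2 * PI * IZR i / INR s) - 2 * PI * IZR q) with ((u - IZR n) * (2*PI) / INR s)
    by (rewrite En; unfold u; field; lra).
  unfold Rdiv. rewrite Rabs_mult, Rabs_mult, (Rabs_pos_eq (2*PI)) by lra.
  rewrite (Rabs_pos_eq (/ INR s)) by (apply Rlt_le, Rinv_0_lt_compat; lra).
  assert (Rabs (u - IZR n) <= /2) by (apply Rabs_le; lra).
  assert (2*PI/INR s < Del/2) by (apply Rmult_lt_reg_r with (INR s); auto; field_simplify; lra).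
  assert (Rabs (u - IZR n) * (2*PI) * / INR s <= /2 * (2*PI) * / INR s).
  { apply Rmult_le_compat_r; [apply Rlt_le, Rinv_0_lt_compat; lra | apply Rmult_le_compat_r; lra]. }
  unfold Rdiv in *. lra.
Qed.

Section Configuration.

Variables (kap g Del : R) (B : nat) (th : config).
Hypothesis kap_pos : 0 < kap.
Hypothesis kap_small : kap <= 1/1000.
Hypothesis g_pos : 0 < g.
Hypothesis Bg_small : INR B * g <= kap / 1000.
Hypothesis B_pos : (1 <= B)%nat.
Hypothesis Del_eq : Del = 12 * INR B * (g*g) / kap.
Hypothesis bad_sw : badSW kap (g*g) B th.

Definition covered (ts : R) : Prop :=
  bad0 kap (g*g) Del B ts th \/
  exists a j : nat, (1 <= a <= 3)%nat /\ (1 <= j <= B)%nat /\ bad_aj kap (g*g) Del B ts a j th.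

Lemma INR_B_ge_1 : 1 <= INR B.
Proof. apply (le_INR 1). auto. Qed.

Lemma g_small : g <= kap/1000.
Proof. pose proof INR_B_ge_1. nra. Qed.

Lemma Bgg_small : INR B * (g*g) <= kap/1000 * (kap/1000).
Proof.
  pose proof INR_B_ge_1. pose proof g_small.
  assert (INR B * g * g <= kap/1000 * g) by nra. nra.
Qed.

Lemma Del_bounds : Del = 12 * (INR B * (g*g) / kap) /\
  0 < INR B * (g*g) / kap <= kap / 1000000.
Proof.
  pose proof INR_B_ge_1. pose proof Bgg_small. split; [rewrite Del_eq; field; lra | split].
  - apply Rdiv_lt_0_compat; nra.
  - apply Rmult_le_reg_r with kap; auto. unfold Rdiv. rewrite Rmult_assoc, Rinv_l by lra. nra.
Qed.

Lemma edge_cos a r : (1 <= a <= 3)%nat -> in_box B r -> in_box B (shift a r) ->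
  Rabs (cos (th r - phi a) - cos (th (shift a r) - phi a)) < g*g.
Proof.
  intros Ha H1 H2. apply Rnot_le_lt. intro X. apply (proj2 bad_sw).
  exists a, r. unfold Scomp. auto.
Qed.

Lemma not_cond_b : ~ cond_b kap B th.
Proof.
  intro C. apply (proj1 bad_sw). split; auto.
  intros a r Ha H1 H2. apply edge_cos; auto.
Qed.

Lemma edge_near a r : (1 <= a <= 3)%nat -> in_box B r -> in_box B (shift a r) ->
  near_or_reflect a (th (shift a r)) (th r) (5*g).
Proof. intros. apply edge_coarse; [apply edge_cos; auto | lra]. Qed.

Lemma not_all_near_PI3 (tn : Z) d : d <= 2*kap ->
  ~ (forall r, in_box B r -> near_mod (th r) (IZR tn * (PI/3)) d).
Proof.
  intros Hd H. destruct (near_PI3_tau tn) as [tau [Ht Hc]]. apply not_cond_b.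
  exists tau. split; auto. intros r Hr. apply Hc. eapply near_mod_weaken; eauto.
Qed.

Lemma aligned_near_PI3 a ts : (1 <= a <= 3)%nat -> aligned kap a ts ->
  exists tn, near_mod ts (IZR tn * (PI/3)) kap /\ ((2 * phi_idx a - tn - tn) mod 6 = 0)%Z /\
             ((tn - phi_idx a) mod 3 = 0)%Z.
Proof.
  intros Ha [H|H].
  - exists (phi_idx a). rewrite <- phi_idx_spec. split; auto. split; Z.div_mod_to_equations; lia.
  - exists (phi_idx a + 3)%Z. split.
    + revert H. rewrite phi_idx_spec. push_IZR.
      replace ((IZR (phi_idx a) + 3) * (PI / 3)) with (IZR (phi_idx a) * (PI / 3) + PI) by field. auto.
    + split; Z.div_mod_to_equations; lia.
Qed.

(** * Case A: the origin is far from the multiples of π/3 *)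

Section FarCase.

Hypothesis far_origin : far_PI3 (th (0,0,0)%nat) kap.

Definition muA : R := kap - 15 * INR B * g.
Definition epsA : R := 11/10*(g*g)/(0.9*muA).
Definition flipA (a : nat) (r : site) : Prop := ~ near_mod (th (shift a r)) (th r) (20*g).

Lemma muA_bounds : 0.985 * kap <= muA <= kap.
Proof. unfold muA. pose proof INR_B_ge_1. split; nra. Qed.

Lemma epsA_pos : 0 < epsA.
Proof. unfold epsA. pose proof muA_bounds. apply Rdiv_lt_0_compat; nra. Qed.

Lemma epsA_drift : (1 + 3 * INR B) * epsA <= 5 * (INR B * (g*g) / kap).
Proof.
  pose proof muA_bounds. pose proof INR_B_ge_1.
  assert (E : epsA <= 1.25 * ((g*g) / kap)).
  { unfold epsA. replace (11/10*(g*g)/(0.9*muA)) with ((g*g)/kap * (11/10*kap/(0.9*muA))) by (field; lra).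
    rewrite (Rmult_comm 1.25). apply Rmult_le_compat_l; [apply Rlt_le, Rdiv_lt_0_compat; nra|].
    apply Rmult_le_reg_r with (0.9*muA); [nra|].
    unfold Rdiv. rewrite Rmult_assoc, Rinv_l by lra. lra. }
  assert (0 < (g*g) / kap) by (apply Rdiv_lt_0_compat; nra).
  replace (INR B * (g*g) / kap) with (INR B * ((g*g) / kap)) by (unfold Rdiv; ring).
  nra.
Qed.

Lemma far_everywhere r : in_box B r -> far_PI3 (th r) muA.
Proof.
  intros Hr.
  destruct (box_path_induction B (fun r k => far_PI3 (th r) (kap - 5*g*INR k))) with (r := r)
    as [k [Hk Hf]]; auto.
  - simpl. replace (kap - 5*g*0) with kap by ring. auto.
  - intros a r' k Ha H1 H2 Hf. rewrite S_INR.
    replace (kap - 5*g*(INR k + 1)) with ((kap - 5*g*INR k) - 5*g) by ring.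
    apply (far_PI3_step (th r')) with a; auto. apply edge_near; auto.
  - apply far_PI3_weaken with (kap - 5*g*INR k); auto.
    unfold muA. pose proof (INR_le_mul 3 B k Hk). simpl in *. nra.
Qed.

Lemma far_plaquette a b r : (1 <= a <= 3)%nat -> (1 <= b <= 3)%nat -> a <> b -> in_box B r ->
  (coord a r < B)%nat -> (coord b r < B)%nat ->
  (flipA a r <-> flipA a (shift b r)) /\ ~ (flipA a r /\ flipA b r).
Proof.
  intros Ha Hb N Hr Hca Hcb.
  assert (Hra : in_box B (shift a r)) by (apply in_box_shift; auto).
  assert (Hrb : in_box B (shift b r)) by (apply in_box_shift; auto).
  assert (Hrab : in_box B (shift b (shift a r)))
    by (apply in_box_shift; auto; rewrite coord_shift_other; auto).
  assert (Hrba : in_box B (shift a (shift b r))) by (rewrite shift_comm; auto).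
  pose proof muA_bounds. pose proof g_small.
  assert (Ew2 := edge_near a (shift b r) Ha Hrb Hrba). rewrite shift_comm in Ew2 by auto.
  destruct (plaquette aff_equiv_far (th r) (5*g) (40*g)
    (fun p1 p2 H1 H2 Hn => near_aff_far_equiv (th r) muA p1 p2 (40*g) (far_everywhere r Hr)
                             H1 H2 Hn ltac:(lra) ltac:(lra))
    (fun p1 p2 _ _ HR => aff_equiv_far_near (th r) p1 p2 (5*g) HR ltac:(lra))
    (th (shift a r)) (th (shift b r)) (th (shift b (shift a r))) (5*g) (20*g) a b
    (plaquette_rule_far a b Ha Hb N)
    ltac:(lra) ltac:(lra) ltac:(lra) ltac:(lra)
    (edge_near a r Ha Hr Hra) (edge_near b r Hb Hr Hrb) (edge_near b (shift a r) Hb Hra Hrab) Ew2)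
    as [C1 [C2 C3]].
  unfold flipA. rewrite (shift_comm a b) by auto. split; tauto.
Qed.

Lemma far_edge_fine a r : (1 <= a <= 3)%nat -> in_box B r -> in_box B (shift a r) ->
  (~ flipA a r -> near_mod (th (shift a r)) (th r) epsA) /\
  (flipA a r -> near_mod (th (shift a r)) (2*phi a - th r) epsA).
Proof.
  intros Ha Hr Hr'. pose proof muA_bounds. pose proof g_small.
  assert (HS := far_PI3_sin_ge (th r) muA a (far_everywhere r Hr) ltac:(lra) ltac:(lra)).
  destruct (edge_fine a (th r) (th (shift a r)) g (0.9*muA) (edge_cos a r Ha Hr Hr') g_pos
    ltac:(lra) HS) as [F1 F2].
  unfold epsA, flipA. split; intro HF.
  - apply NNPP in HF. destruct (edge_near a r Ha Hr Hr') as [C|C]; auto. exfalso.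
    assert (X : near_mod (2*phi a - th r) (th r) (5*g + 20*g))
      by (eapply near_mod_trans; [apply near_mod_sym; exact C | exact HF]).
    pose proof (far_PI3_reflect_not_near _ _ _ _ (far_everywhere r Hr) X). lra.
  - destruct (edge_near a r Ha Hr Hr') as [C|C]; auto.
    exfalso. apply HF. eapply near_mod_weaken; eauto. lra.
Qed.

Lemma far_no_flip_covered ts :
  (forall a r, (1 <= a <= 3)%nat -> in_box B r -> in_box B (shift a r) -> ~ flipA a r) ->
  near_mod (th (0,0,0)%nat) ts (Del/4) -> covered ts.
Proof.
  intros NF Hts. left. split; [exact (proj1 bad_sw)|]. intros r Hr.
  pose proof epsA_pos. pose proof epsA_drift. destruct Del_bounds as [HDel HBg].
  assert (Hr0 := box_drift B th (th (0,0,0)%nat) epsA epsA ltac:(lra) (near_mod_refl _ _ epsA_pos)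
    (fun a r Ha H1 H2 => proj1 (far_edge_fine a r Ha H1 H2) (NF a r Ha H1 H2)) r Hr).
  eapply near_mod_weaken; [eapply near_mod_trans; eauto | nra].
Qed.

Section FarFlip.

Variables (a jj : nat).
Hypothesis Ha : (1 <= a <= 3)%nat.
Hypothesis Hjj : (jj < B)%nat.
Hypothesis flips_in_a : forall b r, (1 <= b <= 3)%nat -> in_box B r -> in_box B (shift b r) ->
  flipA b r -> b = a.
Hypothesis flip_base : flipA a (base a jj).

Lemma far_layer_drift j x e0 : near_mod (th (base a j)) x e0 ->
  forall q, in_box B q -> coord a q = j -> near_mod (th q) x (e0 + 2 * INR B * epsA).
Proof.
  intro H0. apply (layer_drift B a j th x e0 epsA Ha (Rlt_le _ _ epsA_pos) H0).
  intros d r Hd Hda H1 H2 _. apply (far_edge_fine d r Hd H1 H2).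
  intro F. apply Hda. exact (flips_in_a d r Hd H1 H2 F).
Qed.

Lemma far_flip_edge : near_mod (th (base a (S jj))) (2*phi a - th (base a jj)) epsA.
Proof.
  rewrite <- shift_base by auto.
  apply (far_edge_fine a (base a jj) Ha); auto.
  - apply in_box_base; auto; lia.
  - rewrite shift_base by auto. apply in_box_base; auto.
Qed.

Lemma far_sites r : in_box B r -> near_or_reflect a (th r) (th (0,0,0)%nat) ((1 + 3 * INR B) * epsA).
Proof.
  intros Hr. set (th0 := th (0,0,0)%nat).
  destruct (box_path_induction B (fun r k => near_or_reflect a (th r) th0 ((1 + INR k) * epsA)))
    with (r := r) as [k [Hk Hn]]; auto.
  - left. simpl. apply near_mod_refl. pose proof epsA_pos. lra.
  - intros d r' k Hd H1 H2 Hn. rewrite S_INR.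
    replace ((1 + (INR k + 1)) * epsA) with (epsA + (1 + INR k) * epsA) by ring.
    destruct (classic (flipA d r')) as [F|F].
    + assert (d = a) by exact (flips_in_a d r' Hd H1 H2 F). subst d.
      pose proof (proj2 (far_edge_fine a r' Hd H1 H2) F) as X.
      destruct Hn as [Hn|Hn]; [right|left].
      * eapply near_mod_trans; [exact X | apply near_mod_reflect; auto].
      * rewrite <- (reflect_reflect a th0).
        eapply near_mod_trans; [exact X | apply near_mod_reflect; auto].
    + pose proof (proj1 (far_edge_fine d r' Hd H1 H2) F) as X.
      destruct Hn as [Hn|Hn]; [left|right]; eapply near_mod_trans; eauto.
  - pose proof (INR_le_mul 3 B k Hk). pose proof epsA_pos. simpl in *.
    destruct Hn; [left|right]; eapply near_mod_weaken; eauto; nra.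
Qed.

(* If [ts] were aligned, every site would lie near the same multiple of π/3, i.e. condition
   (b) would hold. *)
Lemma far_not_aligned ts : near_mod (th (base a jj)) ts (Del/4) -> ~ aligned kap a ts.
Proof.
  intros Hts Hal. destruct (aligned_near_PI3 a ts Ha Hal) as [tn [Htn [Hm6 _]]].
  pose proof epsA_pos. pose proof epsA_drift. destruct Del_bounds as [HDel HBg].
  set (th0 := th (0,0,0)%nat). set (E := (1 + 3 * INR B) * epsA) in *.
  assert (Hrs : in_box B (base a jj)) by (apply in_box_base; auto; lia).
  assert (H0t : near_mod th0 (IZR tn * (PI/3)) (E + Del/4 + kap)).
  { destruct (far_sites _ Hrs) as [X|X].
    - eapply near_mod_trans; [eapply near_mod_trans; [apply near_mod_sym, X | exact Hts] | exact Htn].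
    - apply (near_PI3_mod6 _ (2 * phi_idx a - tn)); [Z.div_mod_to_equations; lia|].
      rewrite <- reflect_IZR_PI3, <- (reflect_reflect a th0). apply near_mod_reflect.
      eapply near_mod_trans; [eapply near_mod_trans; [apply near_mod_sym, X | exact Hts] | exact Htn]. }
  apply (not_all_near_PI3 tn (E + (E + Del/4 + kap))); [lra|].
  intros r Hr. destruct (far_sites r Hr) as [X|X].
  - eapply near_mod_trans; eauto.
  - eapply near_mod_trans; [exact X|]. apply (near_PI3_mod6 _ (2 * phi_idx a - tn)).
    + Z.div_mod_to_equations; lia.
    + rewrite <- reflect_IZR_PI3. apply near_mod_reflect. auto.
Qed.

Lemma far_flip_covered ts : near_mod (th (base a jj)) ts (Del/4) -> covered ts.
Proof.
  intros Hts. right. exists a, (S jj). split; auto. split; [lia|].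
  pose proof epsA_pos. pose proof epsA_drift. pose proof INR_B_ge_1.
  destruct Del_bounds as [HDel HBg].
  split; [exact (far_not_aligned ts Hts)|]. split; [exact bad_sw|]. split.
  - intros q Hq Hcq. replace (S jj - 1)%nat with jj in Hcq by lia.
    pose proof (far_layer_drift jj _ _ (near_mod_refl _ _ epsA_pos) q Hq Hcq).
    eapply near_mod_weaken; [eapply near_mod_trans; eauto | nra].
  - intros q Hq Hcq. pose proof (far_layer_drift (S jj) _ _ far_flip_edge q Hq Hcq).
    eapply near_mod_weaken; [eapply near_mod_trans; [eauto | apply near_mod_reflect; exact Hts] | nra].
Qed.

End FarFlip.

Lemma far_case : exists psi, forall ts, near_mod psi ts (Del/4) -> covered ts.
Proof.
  destruct (classic (exists a r, (1 <= a <= 3)%nat /\ in_box B r /\ in_box B (shift a r) /\ flipA a r))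
    as [[a [r0 [Ha [Hr0 [Hr0' F0]]]]] | NF].
  - assert (Hc0 : (coord a r0 < B)%nat) by (eapply in_box_shift_lt; eauto).
    exists (th (base a (coord a r0))). apply far_flip_covered; auto.
    + intros b r Hb H1 H2 F. symmetry.
      apply (flip_dir_unique B flipA far_plaquette a b r0 r); auto. eapply in_box_shift_lt; eauto.
    + apply (flip_layer B flipA far_plaquette a r0); auto.
      * apply in_box_base; auto; lia.
      * apply coord_base; auto.
  - exists (th (0,0,0)%nat). intros ts Hts. apply far_no_flip_covered; auto.
    intros a r Ha H1 H2 F. apply NF. eauto 10.
Qed.

End FarCase.

(** * Case B: the origin is near a multiple of π/3 *)

Section NearCase.

Hypothesis near_origin : exists n0, near_mod (th (0,0,0)%nat) (IZR n0 * (PI/3)) kap.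

Definition etaB : R := kap + 15 * INR B * g.
Definition rhoB : R := 15*g + 2*etaB.
Definition epsB : R := 11/10*(g*g)/0.63.
Definition flipB (a : nat) (r : site) : Prop := ~ near_mod (th (shift a r)) (th r) rhoB.

Lemma etaB_bounds : kap <= etaB <= 1.015 * kap.
Proof. unfold etaB. pose proof INR_B_ge_1. split; nra. Qed.

Lemma epsB_pos : 0 < epsB.
Proof. unfold epsB. nra. Qed.

Lemma near_everywhere r : in_box B r -> exists n, near_mod (th r) (IZR n * (PI/3)) etaB.
Proof.
  intros Hr.
  destruct (box_path_induction B
    (fun r k => exists n, near_mod (th r) (IZR n * (PI/3)) (kap + 5*g*INR k))) with (r := r)
    as [k [Hk [n Hn]]]; auto.
  - destruct near_origin as [n0 H0]. exists n0. simpl. replace (kap + 5*g*0) with kap by ring. auto.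
  - intros a r' k Ha H1 H2 [n Hn].
    destruct (near_PI3_step (th r') (th (shift a r')) n _ _ a Hn (edge_near a r' Ha H1 H2)) as [n' Hn'].
    exists n'. rewrite S_INR. eapply near_mod_weaken; eauto. lra.
  - exists n. eapply near_mod_weaken; eauto. unfold etaB. pose proof (INR_le_mul 3 B k Hk). simpl in *. nra.
Qed.

Lemma near_plaquette a b r : (1 <= a <= 3)%nat -> (1 <= b <= 3)%nat -> a <> b -> in_box B r ->
  (coord a r < B)%nat -> (coord b r < B)%nat ->
  (flipB a r <-> flipB a (shift b r)) /\ ~ (flipB a r /\ flipB b r).
Proof.
  intros Ha Hb N Hr Hca Hcb.
  assert (Hra : in_box B (shift a r)) by (apply in_box_shift; auto).
  assert (Hrb : in_box B (shift b r)) by (apply in_box_shift; auto).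
  assert (Hrab : in_box B (shift b (shift a r)))
    by (apply in_box_shift; auto; rewrite coord_shift_other; auto).
  assert (Hrba : in_box B (shift a (shift b r))) by (rewrite shift_comm; auto).
  pose proof etaB_bounds. pose proof g_small.
  destruct (near_everywhere r Hr) as [m Hm].
  assert (Ew2 := edge_near a (shift b r) Ha Hrb Hrba). rewrite shift_comm in Ew2 by auto.
  destruct (plaquette (aff_equiv_near m) (th r) (2*etaB) (rhoB + 20*g)
    (fun p1 p2 H1 H2 Hn => near_aff_near_equiv (th r) m etaB p1 p2 (rhoB + 20*g) Hm H1 H2 Hn
                             ltac:(unfold rhoB; lra))
    (fun p1 p2 H1 H2 HR => aff_equiv_near_near (th r) m etaB p1 p2 Hm H1 H2 ltac:(lra) HR)
    (th (shift a r)) (th (shift b r)) (th (shift b (shift a r))) (5*g) rhoB a b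
    (plaquette_rule_near m a b Ha Hb N)
    ltac:(lra) ltac:(lra) ltac:(unfold rhoB; lra) ltac:(lra)
    (edge_near a r Ha Hr Hra) (edge_near b r Hb Hr Hrb) (edge_near b (shift a r) Hb Hra Hrab) Ew2)
    as [C1 [C2 C3]].
  unfold flipB. rewrite (shift_comm a b) by auto. split; tauto.
Qed.

Lemma near_no_flip_same a r n : (1 <= a <= 3)%nat -> in_box B r -> in_box B (shift a r) ->
  ~ flipB a r -> near_mod (th r) (IZR n * (PI/3)) etaB ->
  near_mod (th (shift a r)) (IZR n * (PI/3)) etaB.
Proof.
  intros Ha Hr Hr' F Hn. apply NNPP in F. pose proof etaB_bounds. pose proof g_small.
  destruct (near_everywhere _ Hr') as [n' Hn'].
  apply (near_PI3_mod6 _ n'); auto.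
  apply (near_PI3_unique (th (shift a r)) n' n etaB (rhoB + etaB)); auto.
  - eapply near_mod_trans; eauto.
  - unfold rhoB; lra.
Qed.

Lemma near_edge_fine a r t : (1 <= a <= 3)%nat -> in_box B r -> in_box B (shift a r) ->
  near_mod (th r) (IZR t * (PI/3)) etaB -> ((t - phi_idx a) mod 3 <> 0)%Z ->
  (near_mod (th (shift a r)) (th r) (5*g) -> near_mod (th (shift a r)) (th r) epsB) /\
  (near_mod (th (shift a r)) (2*phi a - th r) (5*g) ->
   near_mod (th (shift a r)) (2*phi a - th r) epsB).
Proof.
  intros Ha Hr Hr' Ht Htk. pose proof etaB_bounds. pose proof g_small.
  apply (edge_fine a (th r) (th (shift a r)) g 0.63); auto.
  - apply edge_cos; auto.
  - lra.
  - apply (near_PI3_sin_ge _ t etaB); auto; lra.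
Qed.

(* Without flips every site stays near the multiple of π/3 of the origin: condition (b). *)
Lemma near_some_flip : exists a r, (1 <= a <= 3)%nat /\ in_box B r /\ in_box B (shift a r) /\ flipB a r.
Proof.
  apply NNPP. intro NF. destruct near_origin as [n0 H0]. pose proof etaB_bounds.
  apply (not_all_near_PI3 n0 etaB); [lra|]. intros r Hr.
  destruct (box_path_induction B (fun r k => near_mod (th r) (IZR n0 * (PI/3)) etaB)) with (r := r)
    as [k [_ Hn]]; auto.
  - eapply near_mod_weaken; eauto. lra.
  - intros a r' k Ha H1 H2 Hn. apply near_no_flip_same; auto. intro F. apply NF. eauto 10.
Qed.

Section NearFlip.

Variables (a jj : nat) (t t' : Z).
Hypothesis Ha : (1 <= a <= 3)%nat.
Hypothesis Hjj : (jj < B)%nat.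
Hypothesis flips_in_a : forall b r, (1 <= b <= 3)%nat -> in_box B r -> in_box B (shift b r) ->
  flipB b r -> b = a.
Hypothesis flips_on_layer : forall q, in_box B q -> coord a q = jj -> flipB a q.
Hypothesis near_t : near_mod (th (base a jj)) (IZR t * (PI/3)) etaB.
Hypothesis near_t' : near_mod (th (base a (S jj))) (IZR t' * (PI/3)) etaB.

Lemma base_in_box : in_box B (base a jj).
Proof. apply in_box_base; auto; lia. Qed.

Lemma base_succ_in_box : in_box B (shift a (base a jj)).
Proof. rewrite shift_base by auto. apply in_box_base; auto. Qed.

Lemma near_flip_reflects : ((t' - (2 * phi_idx a - t)) mod 6 = 0)%Z.
Proof.
  pose proof etaB_bounds. pose proof g_small.
  assert (F := flips_on_layer _ base_in_box (coord_base a jj Ha)).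
  destruct (edge_near a _ Ha base_in_box base_succ_in_box) as [C|C].
  - exfalso. apply F. eapply near_mod_weaken; eauto. unfold rhoB; lra.
  - rewrite shift_base in C by auto.
    apply (near_PI3_unique (th (base a (S jj))) t' (2 * phi_idx a - t) etaB (5*g + etaB)); auto; [|lra].
    rewrite <- reflect_IZR_PI3.
    eapply near_mod_trans; [exact C | apply near_mod_reflect; auto].
Qed.

Lemma near_flip_off_axis : ((t - phi_idx a) mod 3 <> 0)%Z.
Proof.
  intro Z0. pose proof etaB_bounds.
  apply (flips_on_layer _ base_in_box (coord_base a jj Ha)).
  apply (near_mod_weaken _ _ (etaB + etaB)); [|unfold rhoB; pose proof g_pos; lra].
  rewrite shift_base by auto. eapply near_mod_trans; [exact near_t'|]. apply near_mod_sym.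
  apply (near_PI3_mod6 _ t); auto.
  pose proof near_flip_reflects. Z.div_mod_to_equations; lia.
Qed.

Lemma near_layer j n : near_mod (th (base a j)) (IZR n * (PI/3)) etaB ->
  forall q, in_box B q -> coord a q = j -> near_mod (th q) (IZR n * (PI/3)) etaB.
Proof.
  intros H0 q Hq Hcq.
  destruct (layer_path_induction B a j (fun q k => near_mod (th q) (IZR n * (PI/3)) etaB) Ha)
    with (r := q) as [k [_ Hn]]; auto.
  intros d r' k Hd Hda H1 H2 Hc Hn. apply near_no_flip_same; auto.
  intro F; apply Hda; exact (flips_in_a d r' Hd H1 H2 F).
Qed.

Lemma near_cross q : in_box B q -> coord a q = jj ->
  in_box B (shift a q) /\ near_mod (th (shift a q)) (2*phi a - th q) epsB.
Proof.
  intros Hq Hcq. assert (Hq' : in_box B (shift a q)) by (apply in_box_shift; auto; lia).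
  split; auto. pose proof etaB_bounds. pose proof g_small.
  destruct (near_edge_fine a q t Ha Hq Hq' (near_layer jj t near_t q Hq Hcq) near_flip_off_axis)
    as [F1 F2].
  destruct (edge_near a q Ha Hq Hq') as [C|C]; auto.
  exfalso. apply (flips_on_layer q Hq Hcq). eapply near_mod_weaken; eauto. unfold rhoB; lra.
Qed.

Lemma near_inlayer d q n : (1 <= d <= 3)%nat -> d <> a -> in_box B q -> in_box B (shift d q) ->
  near_mod (th q) (IZR n * (PI/3)) etaB -> near_mod (th (shift d q)) (IZR n * (PI/3)) etaB ->
  ((n - phi_idx d) mod 3 <> 0)%Z -> near_mod (th (shift d q)) (th q) epsB.
Proof.
  intros Hd Hda Hq Hq' H1 H2 Hm. pose proof etaB_bounds. pose proof g_small.
  destruct (near_edge_fine d q n Hd Hq Hq' H1 Hm) as [F1 F2].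
  destruct (edge_near d q Hd Hq Hq') as [C|C]; auto.
  exfalso. apply Hm.
  assert (X : ((2 * phi_idx d - n - n) mod 6 = 0)%Z).
  { apply (near_PI3_unique (th (shift d q)) (2 * phi_idx d - n) n (5*g + etaB) etaB); auto; [|lra].
    rewrite <- reflect_IZR_PI3.
    eapply near_mod_trans; [exact C | apply near_mod_reflect; auto]. }
  Z.div_mod_to_equations; lia.
Qed.

(* Inside the layer, a [d]-edge is sensitive enough for the fine estimate on at least one of
   the two adjacent layers; the pair of layers is crossed on that side. *)
Lemma near_slab_step d q e : (1 <= d <= 3)%nat -> d <> a -> in_box B q -> in_box B (shift d q) ->
  coord a q = jj ->
  near_mod (th q) (th (base a jj)) e ->
  near_mod (th (shift a q)) (2*phi a - th (base a jj)) (e + epsB) ->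
  near_mod (th (shift d q)) (th (base a jj)) (e + 3*epsB) /\
  near_mod (th (shift a (shift d q))) (2*phi a - th (base a jj)) (e + 4*epsB).
Proof.
  intros Hd Hda H1 H2 Hc Hn1 Hn2. set (x := th (base a jj)) in *.
  pose proof epsB_pos as He.
  assert (Hc2 : coord a (shift d q) = jj) by (rewrite coord_shift_other; auto).
  destruct (near_cross q H1 Hc) as [H1a _].
  destruct (near_cross (shift d q) H2 Hc2) as [H2a X2].
  assert (Hca1 : coord a (shift a q) = S jj) by (rewrite coord_shift_same; auto).
  assert (near_t'_layer := near_layer (S jj) t' near_t').
  destruct (phi_idx_escape a d t t' Ha Hd Hda near_flip_reflects near_flip_off_axis) as [Dt|Dt].
  - assert (E1 := near_inlayer d q t Hd Hda H1 H2 (near_layer jj t near_t q H1 Hc)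
                    (near_layer jj t near_t _ H2 Hc2) Dt).
    assert (N1 : near_mod (th (shift d q)) x (e + 3*epsB))
      by (eapply near_mod_weaken; [eapply near_mod_trans; eauto | lra]).
    split; auto.
    eapply near_mod_weaken; [eapply near_mod_trans; [exact X2 | apply near_mod_reflect, N1] | lra].
  - assert (Hs1 : in_box B (shift d (shift a q))).
    { apply in_box_shift; auto. rewrite coord_shift_other; auto. eapply in_box_shift_lt; eauto. }
    assert (E2 := near_inlayer d (shift a q) t' Hd Hda H1a Hs1 (near_t'_layer _ H1a Hca1)
                    (near_t'_layer _ Hs1 ltac:(rewrite coord_shift_other; auto)) Dt).
    rewrite (shift_comm d a) in E2 by auto.
    assert (N2 := near_mod_trans _ _ _ _ _ E2 Hn2).
    split; [|eapply near_mod_weaken; [exact N2 | lra]].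
    assert (Y : near_mod (th (shift d q)) (2*phi a - th (shift a (shift d q))) epsB).
    { rewrite <- (reflect_reflect a (th (shift d q))). apply near_mod_reflect, near_mod_sym. auto. }
    apply near_mod_weaken with (epsB + (epsB + (e + epsB))); [|lra].
    eapply near_mod_trans; [exact Y|].
    rewrite <- (reflect_reflect a x). apply near_mod_reflect. exact N2.
Qed.

Lemma near_slab q : in_box B q -> coord a q = jj ->
  near_mod (th q) (th (base a jj)) ((6 * INR B + 1) * epsB) /\
  near_mod (th (shift a q)) (2*phi a - th (base a jj)) ((6 * INR B + 2) * epsB).
Proof.
  intros Hq Hcq. pose proof epsB_pos as He.
  destruct (layer_path_induction B a jj (fun q k =>
      near_mod (th q) (th (base a jj)) ((3 * INR k + 1) * epsB) /\
      near_mod (th (shift a q)) (2*phi a - th (base a jj)) ((3 * INR k + 2) * epsB)) Ha)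
    with (r := q) as [k [Hk [Hn1 Hn2]]]; auto.
  - simpl. split; [apply near_mod_refl; lra|].
    eapply near_mod_weaken; [apply (near_cross _ base_in_box (coord_base a jj Ha)) | lra].
  - intros d q1 k Hd Hda H1 H2 Hc [Hn1 Hn2]. rewrite S_INR.
    destruct (near_slab_step d q1 ((3 * INR k + 1) * epsB) Hd Hda H1 H2 Hc Hn1
                (near_mod_weaken _ _ _ ((3 * INR k + 1) * epsB + epsB) Hn2 ltac:(lra))) as [N1 N2].
    split; eapply near_mod_weaken; eauto; lra.
  - pose proof (INR_le_mul 2 B k Hk). simpl in *. split; eapply near_mod_weaken; eauto; nra.
Qed.

Lemma near_not_aligned ts : near_mod (th (base a jj)) ts (Del/4) -> ~ aligned kap a ts.
Proof.
  intros Hts Hal. destruct (aligned_near_PI3 a ts Ha Hal) as [tn [Htn [_ Hm3]]].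
  pose proof etaB_bounds. destruct Del_bounds as [HDel HBg].
  apply near_flip_off_axis.
  assert (X : ((t - tn) mod 6 = 0)%Z).
  { apply (near_PI3_unique (th (base a jj)) t tn etaB (Del/4 + kap)); auto.
    - eapply near_mod_trans; eauto.
    - lra. }
  Z.div_mod_to_equations; lia.
Qed.

Lemma near_flip_covered ts : near_mod (th (base a jj)) ts (Del/4) -> covered ts.
Proof.
  intros Hts. right. exists a, (S jj). split; auto. split; [lia|].
  pose proof INR_B_ge_1. pose proof g_small. pose proof epsB_pos.
  destruct Del_bounds as [HDel HBg].
  assert (HEB : (6 * INR B + 2) * epsB + Del/4 < Del).
  { assert (INR B * (g*g) = kap * (INR B * (g * g) / kap)) by (field; lra).
    unfold epsB. rewrite HDel. nra. }
  split; [exact (near_not_aligned ts Hts)|]. split; [exact bad_sw|]. split.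
  - intros q Hq Hcq. replace (S jj - 1)%nat with jj in Hcq by lia.
    destruct (near_slab q Hq Hcq) as [X _].
    eapply near_mod_weaken; [eapply near_mod_trans; [exact X | exact Hts] | lra].
  - intros q' Hq' Hcq'. set (q := upd a jj q').
    assert (Hq : in_box B q) by (apply in_box_upd; auto; lia).
    assert (Hcq : coord a q = jj) by (apply coord_upd_same; auto).
    assert (Eq : shift a q = q').
    { unfold q. replace jj with (coord a q' - 1)%nat by lia. apply shift_upd_pred; auto; lia. }
    destruct (near_slab q Hq Hcq) as [_ X]. rewrite Eq in X.
    eapply near_mod_weaken; [eapply near_mod_trans; [exact X | apply near_mod_reflect; exact Hts] | lra].
Qed.

End NearFlip.

Lemma near_case : exists psi, forall ts, near_mod psi ts (Del/4) -> covered ts.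
Proof.
  destruct near_some_flip as [a [r0 [Ha [Hr0 [Hr0' F0]]]]].
  assert (Hc0 : (coord a r0 < B)%nat) by (eapply in_box_shift_lt; eauto).
  set (jj := coord a r0) in *.
  assert (Hrs : in_box B (base a jj)) by (apply in_box_base; auto; lia).
  assert (Hrs' : in_box B (base a (S jj))) by (apply in_box_base; auto).
  destruct (near_everywhere _ Hrs) as [t Ht].
  destruct (near_everywhere _ Hrs') as [t' Ht'].
  exists (th (base a jj)). apply (near_flip_covered a jj t t'); auto.
  - intros b r Hb H1 H2 F. symmetry.
    apply (flip_dir_unique B flipB near_plaquette a b r0 r); auto. eapply in_box_shift_lt; eauto.
  - intros q Hq Hcq. apply (flip_layer B flipB near_plaquette a r0 q); auto.
Qed.

End NearCase.

Lemma covered_near_center : exists psi, forall ts, near_mod psi ts (Del/4) -> covered ts.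
Proof.
  destruct (classic (exists n : Z, near_mod (th (0,0,0)%nat) (IZR n * (PI/3)) kap)) as [Hn|NH].
  - exact (near_case Hn).
  - apply far_case. intro n. apply Rnot_lt_le. intro X. apply NH. exists n, 0%Z.
    replace (th (0,0,0)%nat - IZR n * (PI / 3) - 2 * PI * IZR 0)
      with (th (0,0,0)%nat - IZR n * (PI / 3)) by (simpl; ring). auto.
Qed.

End Configuration.

Theorem theorem6p4 :
  exists c0 : R, 0 < c0 /\
  forall (kap Gam Del th0 : R) (B s : nat),
    0 < kap -> 0 < Gam ->
    kap <= c0 ->
    INR B * sqrt Gam <= c0 * kap ->
    Del = 12 * INR B * Gam / kap ->
    INR s * Del > 4 * PI ->
    forall th : config,
      badSW kap Gam B th ->
      exists i : nat, (1 <= i <= s)%nat /\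
        (bad0 kap Gam Del B (theta_star th0 s i) th \/
         exists a j : nat, (1 <= a <= 3)%nat /\ (1 <= j <= B)%nat /\
           bad_aj kap Gam Del B (theta_star th0 s i) a j th).
Proof.
  exists (1/1000). split; [lra|].
  intros kap Gam Del th0 B s Hk HG Hkc HBs HDel Hs th HSW.
  pose proof PI_gt_3.
  assert (Hg : 0 < sqrt Gam) by (apply sqrt_lt_R0; auto).
  assert (HGg : Gam = sqrt Gam * sqrt Gam) by (rewrite sqrt_sqrt; lra).
  assert (HB1 : (1 <= B)%nat).
  { destruct B; [|lia]. exfalso. rewrite HDel in Hs. simpl in Hs. nra. }
  assert (HDp : 0 < Del).
  { pose proof (le_INR 1 B HB1). simpl in *. rewrite HDel. apply Rdiv_lt_0_compat; nra. }
  rewrite HGg in HDel, HSW |- *.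
  destruct (covered_near_center kap (sqrt Gam) Del B th Hk Hkc Hg ltac:(lra) HB1 HDel HSW)
    as [psi Hpsi].
  destruct (exists_theta_star_near s Del th0 psi HDp Hs) as [i [Hi Hn]].
  exists i. split; [exact Hi | exact (Hpsi _ Hn)].
Qed.
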